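(* Let $\varphi$ be a non-degenerate computable forecasting system and let $\omega\in\Omega$. Then $\omega$ is Martin-Löf random for $\varphi$ if and only if $\omega$ is Martin-Löf test random for $\varphi$.
   Context: Notation: $\mathbb N_0=\{0,1,2,\dots\}$; $\Omega=\{0,1\}^{\mathbb N}$ is the set of paths $\omega=(\omega_1,\omega_2,\dots)$; $\mathbb S=\bigcup_{n\in\mathbb N_0}\{0,1\}^n$ is the set of situations (finite binary strings), $\square$ the empty string, $|s|$ the length of $s$, $\omega^n=(\omega_1,\dots,\omega_n)$ with $\omega^0=\square$, and $sx$ the concatenation of $s$ with $x\in\{0,1\}$. The cylinder set of $s$ is $[s]=\{\omega\in\Omega:\omega^{|s|}=s\}$ and $[A]=\bigcup_{s\in A}[s]$ for $A\subseteq\mathbb S$. For $A\subseteq\mathbb N_0\times\mathbb S$ and $n\in\mathbb N_0$, $A_n=\{s\in\mathbb S:(n,s)\in A\}$. Forecasts: $\mathcal I$ is the set of nonempty closed subintervals of $[0,1]$; for $I\in\mathcal I$ and $f:\{0,1\}\to\mathbb R$, $\overline E_I(f)=\max_{p\in I}[pf(1)+(1-p)f(0)]$. A forecasting system is a map $\varphi:\mathbb S\to\mathcal I$; write $\underline\varphi(s)=\min\varphi(s)$, $\overline\varphi(s)=\max\varphi(s)$. It is non-degenerate if $\underline\varphi(s)<1$ and $\overline\varphi(s)>0$ for all $s\in\mathbb S$. A supermartingale for $\varphi$ is a map $M:\mathbb S\to\mathbb R$ with $\overline E_{\varphi(s)}(M(s\,\cdot))\le M(s)$ for all $s$, where $M(s\,\cdot)$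 is the map $x\mapsto M(sx)$. A test supermartingale is a non-negative supermartingale with $M(\square)=1$. Global upper probability: for $G\subseteq\Omega$, $\overline P_\varphi(G)=\inf\{M(\square): M\text{ supermartingale for }\varphi,\ \liminf_{n\to\infty}M(\omega^n)\ge \mathbb 1_G(\omega)\text{ for all }\omega\in\Omega\}$. Computability: elements of countable sets such as $\mathbb N_0,\mathbb S,\mathbb Q$ and their products are encoded by natural numbers; recursive maps and recursive/recursively enumerable sets are as usual. A real map $r:\mathcal D\to\mathbb R$ is lower semicomputable if there is a recursive $q:\mathcal D\times\mathbb N_0\to\mathbb Q$ with $q(d,n+1)\ge q(d,n)$ and $\lim_n q(d,n)=r(d)$ for all $d$; upper semicomputable if $-r$ is lower semicomputable; computable if both (equivalently, there is a recursive $q:\mathcal D\times\mathbb N_0\to\mathbb Q$ with $|r(d)-q(d,N)|\le2^{-N}$ for all $d,N$). $\varphi$ is computable if $\underline\varphi$ and $\overline\varphi$ are computable real maps on $\mathbb S$. Martin-Löf randomness: $\omega$ is Martin-Löf random for $\varphi$ if every lower semicomputable test supermartingale $T$ for $\varphi$ satisfies $\sup_{n\in\mathbb N_0}T(\omega^n)<\infty$. A Martin-Löf test for $\varphi$ is a recursively enumerable set $A\subseteq\mathbb N_0\times\mathbb S$ with $\overline P_\varphi([A_n])\le2^{-n}$ for all $n\in\mathbb N_0$. $\omega$ is Martin-Löf test random for $\varphi$ if $\omega\notin\bigcap_{n\in\mathbb N_0}[A_n]$ for every Martin-Löf test $A$ for $\varphi$. *)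

From Stdlib Require Import Reals Lra List Arith ClassicalDescription.
From Coquelicot Require Import Coquelicot.
Import ListNotations.
Open Scope R_scope.

(* Cantor pairing and its inverse (enumeration of N x N along diagonals) *)
Definition npair (a b : nat) : nat := ((a + b) * (a + b + 1)) / 2 + b.

Fixpoint nunpair (n : nat) : nat * nat :=
  match n with
  | O => (O, O)
  | S n' => let (a, b) := nunpair n' in
            match a with O => (S b, O) | S a' => (a', S b) end
  end.

Inductive prcode : Type :=
  | PZero
  | PSucc
  | PId
  | PFst
  | PSnd
  | PComp (f g : prcode)
  | PPair (f g : prcode)
  | PRec (f g : prcode)         (* h <y,0> = f y ; h <y,n+1> = g <y,<n,h <y,n>>> *)
  | PMu (f : prcode).           (* x |-> least n with f <x,n> = 0 (all earlier defined) *)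

Fixpoint peval (k : nat) (c : prcode) (x : nat) {struct k} : option nat :=
  match k with
  | O => None
  | S k' =>
    match c with
    | PZero => Some O
    | PSucc => Some (S x)
    | PId => Some x
    | PFst => Some (fst (nunpair x))
    | PSnd => Some (snd (nunpair x))
    | PComp f g => match peval k' g x with
                   | Some y => peval k' f y | None => None end
    | PPair f g => match peval k' f x, peval k' g x with
                   | Some a, Some b => Some (npair a b) | _, _ => None end
    | PRec f g => let (y, n) := nunpair x in
                  match n with
                  | O => peval k' f y
                  | S n' => match peval k' (PRec f g) (npair y n') with
                            | Some r => peval k' g (npair y (npair n' r))
                            | None => None end
                  end
    | PMu f => let fix loop (j i : nat) : option nat :=
                   match j with
                   | O => None
                   | S j' => match peval k' f (npair x i) with
                             | Some O => Some i
                             | Some (S _) => loop j' (S i)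
                             | None => None end
                   end in loop k' O
    end
  end.

Definition recursive (g : nat -> nat) : Prop :=
  exists c : prcode, forall x, exists k, peval k c x = Some (g x).

(* Situations: finite binary strings; paths: infinite binary sequences.
   The path omega = (omega_1, omega_2, ...) is represented by w with
   w k = omega_(k+1). *)
Definition situation := list bool.
Definition path := nat -> bool.

Fixpoint prefix (w : path) (n : nat) : situation :=
  match n with O => [] | S n' => prefix w n' ++ [w n'] end.

(* bijective encoding of situations by natural numbers *)
Fixpoint encS (s : situation) : nat :=
  match s with
  | [] => O
  | b :: s' => 2 * encS s' + 1 + (if b then 1 else 0)
  end%nat.

(* decoding of natural numbers into rationals (viewed as reals):
   n = <a,b> |-> z(a) / (b+1), z the standard numbering of Z *)
Definition decZ (a : nat) : R :=
  if Nat.even a then INR (a / 2) else - INR ((a + 1) / 2).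
Definition decQ (n : nat) : R :=
  decZ (fst (nunpair n)) / INR (S (snd (nunpair n))).

Definition lower_semicomputable (r : situation -> R) : Prop :=
  exists g : nat -> nat, recursive g /\
    forall s : situation,
      (forall n, decQ (g (npair (encS s) n)) <= decQ (g (npair (encS s) (S n)))) /\
      is_lim_seq (fun n => decQ (g (npair (encS s) n))) (Finite (r s)).

Definition upper_semicomputable (r : situation -> R) : Prop :=
  lower_semicomputable (fun s => - r s).

Definition computable (r : situation -> R) : Prop :=
  lower_semicomputable r /\ upper_semicomputable r.

Record forecasting_system := {
  fs_lo : situation -> R;
  fs_hi : situation -> R;
  fs_lo_ge0 : forall s, 0 <= fs_lo s;
  fs_lo_le_hi : forall s, fs_lo s <= fs_hi s;
  fs_hi_le1 : forall s, fs_hi s <= 1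
}.

Definition non_degenerate (phi : forecasting_system) : Prop :=
  forall s, fs_lo phi s < 1 /\ 0 < fs_hi phi s.

Definition computable_fs (phi : forecasting_system) : Prop :=
  computable (fs_lo phi) /\ computable (fs_hi phi).

Definition upper_exp (lo hi : R) (f : bool -> R) : Rbar :=
  Lub_Rbar (fun v => exists p, lo <= p <= hi /\ v = p * f true + (1 - p) * f false).

Definition supermartingale (phi : forecasting_system) (M : situation -> R) : Prop :=
  forall s, Rbar_le (upper_exp (fs_lo phi s) (fs_hi phi s) (fun x => M (s ++ [x])))
                    (Finite (M s)).

Definition test_supermartingale (phi : forecasting_system) (M : situation -> R) : Prop :=
  supermartingale phi M /\ (forall s, 0 <= M s) /\ M [] = 1.

Definition indicator (G : path -> Prop) (w : path) : R :=
  match excluded_middle_informative (G w) with left _ => 1 | right _ => 0 end.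

Definition upper_prob (phi : forecasting_system) (G : path -> Prop) : Rbar :=
  Glb_Rbar (fun v => exists M, supermartingale phi M /\
              (forall w, Rbar_le (Finite (indicator G w))
                                 (LimInf_seq (fun n => M (prefix w n)))) /\
              v = M []).

Definition cylinder (s : situation) (w : path) : Prop := prefix w (length s) = s.
Definition cylinder_set (A : situation -> Prop) (w : path) : Prop :=
  exists s, A s /\ cylinder s w.

Definition rec_enumerable (A : nat -> situation -> Prop) : Prop :=
  exists h : nat -> nat, recursive h /\
    forall n s, A n s <-> exists k, h (npair (npair n (encS s)) k) = O.

Definition ML_random (phi : forecasting_system) (w : path) : Prop :=
  forall T : situation -> R,
    lower_semicomputable T -> test_supermartingale phi T ->
    exists B : R, forall n, T (prefix w n) <= B.

Definition ML_test (phi : forecasting_system) (A : nat -> situation -> Prop) : Prop :=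
  rec_enumerable A /\
  forall n, Rbar_le (upper_prob phi (cylinder_set (A n))) (Finite (/ 2 ^ n)).

Definition ML_test_random (phi : forecasting_system) (w : path) : Prop :=
  forall A, ML_test phi A -> ~ (forall n, cylinder_set (A n) w).

From Stdlib Require Import Reals Lra Lia List Arith ClassicalDescription Classical.
From Coquelicot Require Import Coquelicot.
Import ListNotations.

(** - Test randomness implies randomness: if a lower semicomputable test
      supermartingale [T] is unbounded on [w], the situations where some
      rational approximation of [T] exceeds [2^n] form a Martin-Löf test
      containing [w]. It is recursively enumerable, and [T / 2^n], stopped at 1
      on entering level [n], certifies the upper probability bound [2^-n].
    - Randomness implies test randomness: from a Martin-Löf test [A] we build
      the test supermartingale [sum_n W_n], where [W_n] is the backward-induction
      value of the game of reaching [[A (n+1)]], at most [2^-(n+1)] at the root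
      by the upper probability bound. Its stage-[j] approximations use only
      [j] steps of the enumeration of [A], depth [j] and stage-[j] lower
      approximations of the forecast bounds, so the sum is lower
      semicomputable; non-degeneracy keeps it finite, and it is unbounded on
      every path of the intersection of the [[A n]]. *)

Section CantorPairing.
Local Open Scope nat_scope.

Definition un1 (n : nat) : nat := fst (nunpair n).
Definition un2 (n : nat) : nat := snd (nunpair n).

(** [nunpair] enumerates the diagonals; these are its two kinds of step. *)
Lemma npair_next_diagonal b : npair (S b) 0 = S (npair 0 b).
Proof.
  unfold npair. replace (S b + 0) with (b + 1) by lia. replace (0 + b) with b by lia.
  replace ((b + 1) * (b + 1 + 1)) with (b * (b + 1) + (b + 1) * 2) by nia.
  rewrite Nat.div_add by lia. lia.
Qed.

Lemma npair_next_on_diagonal a b : npair a (S b) = S (npair (S a) b).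
Proof. unfold npair. replace (a + S b) with (S a + b) by lia. lia. Qed.

Lemma unpair_pair a b : nunpair (npair a b) = (a, b).
Proof.
  remember (a + b) as d eqn:Hd. revert a b Hd.
  induction d as [|d IH]; intros a b Hd.
  - assert (a = 0) by lia; assert (b = 0) by lia; subst. reflexivity.
  - induction b as [|b IHb] in a, Hd |- *.
    + destruct a as [|a]; [lia|]. rewrite npair_next_diagonal. simpl.
      rewrite (IH 0 a) by lia. reflexivity.
    + rewrite npair_next_on_diagonal. simpl. rewrite (IHb (S a)) by lia. reflexivity.
Qed.

Lemma un1_pair a b : un1 (npair a b) = a.
Proof. unfold un1; rewrite unpair_pair; reflexivity. Qed.

Lemma un2_pair a b : un2 (npair a b) = b.
Proof. unfold un2; rewrite unpair_pair; reflexivity. Qed.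

Lemma pair_unpair n : npair (un1 n) (un2 n) = n.
Proof.
  unfold un1, un2. induction n as [|n IH]; [reflexivity|].
  simpl. destruct (nunpair n) as [[|a] b]; simpl in *.
  - rewrite npair_next_diagonal. congruence.
  - rewrite npair_next_on_diagonal. congruence.
Qed.

End CantorPairing.

Section Fuel.
Local Open Scope nat_scope.

Definition mu_loop (ev : nat -> option nat) : nat -> nat -> option nat :=
  fix loop (j i : nat) : option nat :=
    match j with
    | O => None
    | S j' => match ev i with
              | Some O => Some i
              | Some (S _) => loop j' (S i)
              | None => None end
    end.

Lemma peval_mu k f x : peval (S k) (PMu f) x = mu_loop (fun i => peval k f (npair x i)) k 0.
Proof. reflexivity. Qed.

Lemma peval_comp k f g x : peval (S k) (PComp f g) x =
  match peval k g x with Some y => peval k f y | None => None end.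
Proof. reflexivity. Qed.

Lemma peval_pair k f g x : peval (S k) (PPair f g) x =
  match peval k f x, peval k g x with Some a, Some b => Some (npair a b) | _, _ => None end.
Proof. reflexivity. Qed.

Lemma peval_rec k f g x : peval (S k) (PRec f g) x =
  let (y, n) := nunpair x in
  match n with
  | O => peval k f y
  | S n' => match peval k (PRec f g) (npair y n') with
            | Some r => peval k g (npair y (npair n' r)) | None => None end
  end.
Proof. reflexivity. Qed.

Lemma mu_loop_mono (ev1 ev2 : nat -> option nat) :
  (forall i v, ev1 i = Some v -> ev2 i = Some v) ->
  forall j i v, mu_loop ev1 j i = Some v -> mu_loop ev2 (S j) i = Some v.
Proof.
  intros H. induction j as [|j IH]; intros i v E; [discriminate|].
  simpl in E |- *. destruct (ev1 i) as [[|m]|] eqn:E1; try discriminate.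
  - rewrite (H _ _ E1). exact E.
  - rewrite (H _ _ E1). apply IH. exact E.
Qed.

Lemma peval_S k c x v : peval k c x = Some v -> peval (S k) c x = Some v.
Proof.
  revert c x v. induction k as [|k IH]; intros c x v E; [discriminate|].
  destruct c; try exact E.
  - rewrite peval_comp in E |- *. destruct (peval k c2 x) as [y|] eqn:E1; [|discriminate].
    rewrite (IH _ _ _ E1). apply IH; exact E.
  - rewrite peval_pair in E |- *. destruct (peval k c1 x) as [y|] eqn:E1; [|discriminate].
    destruct (peval k c2 x) as [z|] eqn:E2; [|discriminate].
    rewrite (IH _ _ _ E1), (IH _ _ _ E2). exact E.
  - rewrite peval_rec in E |- *. destruct (nunpair x) as [y [|n]].
    + apply IH; exact E.
    + destruct (peval k (PRec c1 c2) (npair y n)) as [r|] eqn:E1; [|discriminate].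
      rewrite (IH _ _ _ E1). apply IH; exact E.
  - rewrite peval_mu in E |- *.
    exact (mu_loop_mono _ _ (fun i w Ew => IH _ _ _ Ew) _ _ _ E).
Qed.

Lemma peval_mono k k' c x v : k <= k' -> peval k c x = Some v -> peval k' c x = Some v.
Proof. induction 1; auto using peval_S. Qed.

End Fuel.

(** * A first-order programming language compiled to partial recursive codes *)

(** Expressions read an environment [r] coding a stack of values
    [npair v0 (npair v1 ...)]: [EV i] is the [i]-th value, [ELet a b] pushes
    the value of [a] before evaluating [b], [ERec n b s] is primitive
    recursion on the value of [n] (the step [s] sees the previous result and
    the counter pushed on the stack), and [ECall g a] calls an oracle [g]. *)
Inductive pexp : Type :=
| EZ | ES (a : pexp) | EV (i : nat) | EP (a b : pexp) | EFst (a : pexp) | ESnd (a : pexp)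
| ECall (g : nat -> nat) (a : pexp) | ELet (a b : pexp) | ERec (n b s : pexp).

Section Programs.
Local Open Scope nat_scope.

Definition snds (i r : nat) : nat := Nat.iter i un2 r.

Fixpoint iterR (f0 : nat) (st : nat -> nat -> nat) (m : nat) : nat :=
  match m with O => f0 | S m' => st m' (iterR f0 st m') end.

Fixpoint eval (r : nat) (e : pexp) : nat :=
  match e with
  | EZ => 0
  | ES a => S (eval r a)
  | EV i => un1 (snds i r)
  | EP a b => npair (eval r a) (eval r b)
  | EFst a => un1 (eval r a)
  | ESnd a => un2 (eval r a)
  | ECall g a => g (eval r a)
  | ELet a b => eval (npair (eval r a) r) b
  | ERec n b s =>
      let fix it (m : nat) : nat :=
        match m with O => eval r b | S m' => eval (npair (it m') (npair m' r)) s end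
      in it (eval r n)
  end.

Lemma eval_rec r n b s : eval r (ERec n b s) =
  iterR (eval r b) (fun m x => eval (npair x (npair m r)) s) (eval r n).
Proof. simpl. generalize (eval r n). induction n0; simpl; congruence. Qed.

Lemma iterR_ext f0 st1 st2 m :
  (forall k x, st1 k x = st2 k x) -> iterR f0 st1 m = iterR f0 st2 m.
Proof. intros H; induction m; simpl; congruence. Qed.

Fixpoint calls (e : pexp) : list (nat -> nat) :=
  match e with
  | EZ | EV _ => nil
  | ES a | EFst a | ESnd a => calls a
  | EP a b | ELet a b => calls a ++ calls b
  | ECall g a => g :: calls a
  | ERec n b s => calls n ++ calls b ++ calls s
  end.

Definition computes (c : prcode) (f : nat -> nat) : Prop :=
  forall x, exists k, peval k c x = Some (f x).

Lemma computes_ext c f g : computes c f -> (forall x, f x = g x) -> computes c g.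
Proof. intros H E x. destruct (H x) as [k Hk]. exists k. rewrite <- E. exact Hk. Qed.

Lemma computes_id : computes PId (fun x => x).
Proof. intros x; exists 1; reflexivity. Qed.
Lemma computes_fst : computes PFst un1.
Proof. intros x; exists 1; reflexivity. Qed.
Lemma computes_snd : computes PSnd un2.
Proof. intros x; exists 1; reflexivity. Qed.
Lemma computes_zero : computes PZero (fun _ => 0).
Proof. intros x; exists 1; reflexivity. Qed.
Lemma computes_succ : computes PSucc S.
Proof. intros x; exists 1; reflexivity. Qed.

Lemma computes_comp c d f g :
  computes c f -> computes d g -> computes (PComp c d) (fun x => f (g x)).
Proof.
  intros Hc Hd x. destruct (Hd x) as [k1 E1]. destruct (Hc (g x)) as [k2 E2].
  exists (S (k1 + k2)). rewrite peval_comp.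
  rewrite (peval_mono k1 (k1 + k2) _ _ _ ltac:(lia) E1).
  exact (peval_mono k2 (k1 + k2) _ _ _ ltac:(lia) E2).
Qed.

Lemma computes_pair c d f g :
  computes c f -> computes d g -> computes (PPair c d) (fun x => npair (f x) (g x)).
Proof.
  intros Hc Hd x. destruct (Hc x) as [k1 E1]. destruct (Hd x) as [k2 E2].
  exists (S (k1 + k2)). rewrite peval_pair.
  rewrite (peval_mono k1 (k1 + k2) _ _ _ ltac:(lia) E1),
          (peval_mono k2 (k1 + k2) _ _ _ ltac:(lia) E2).
  reflexivity.
Qed.

Lemma computes_rec c d f g :
  computes c f -> computes d g ->
  computes (PRec c d)
    (fun x => iterR (f (un1 x)) (fun m r => g (npair (un1 x) (npair m r))) (un2 x)).
Proof.
  intros Hc Hd x. rewrite <- (pair_unpair x). rewrite un1_pair, un2_pair.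
  generalize (un1 x) (un2 x). intros y n. induction n as [|n [k1 E1]].
  - destruct (Hc y) as [k E]. exists (S k). rewrite peval_rec, unpair_pair. exact E.
  - cbn [iterR].
    destruct (Hd (npair y (npair n (iterR (f y) (fun m r => g (npair y (npair m r))) n))))
      as [k2 E2].
    exists (S (k1 + k2)). rewrite peval_rec, unpair_pair.
    rewrite (peval_mono k1 (k1 + k2) _ _ _ ltac:(lia) E1).
    exact (peval_mono k2 (k1 + k2) _ _ _ ltac:(lia) E2).
Qed.

Fixpoint snds_code (i : nat) : prcode :=
  match i with O => PId | S i' => PComp PSnd (snds_code i') end.

Lemma computes_snds i : computes (snds_code i) (snds i).
Proof.
  induction i as [|i IH]; simpl.
  - apply computes_id.
  - exact (computes_comp _ _ _ _ computes_snd IH).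
Qed.

Theorem compile e :
  (forall g, In g (calls e) -> recursive g) -> exists c, computes c (fun r => eval r e).
Proof.
  induction e; cbn [calls]; intros Ho;
    let sub := (intros ?g ?Hg; apply Ho; rewrite ?in_app_iff; simpl; tauto) in
    try (destruct IHe as [c Hc]; [sub|]);
    try (destruct IHe1 as [c1 Hc1]; [sub|]);
    try (destruct IHe2 as [c2 Hc2]; [sub|]);
    try (destruct IHe3 as [c3 Hc3]; [sub|]).
  - exists PZero. exact computes_zero.
  - exists (PComp PSucc c). exact (computes_comp _ _ _ _ computes_succ Hc).
  - exists (PComp PFst (snds_code i)).
    exact (computes_comp _ _ _ _ computes_fst (computes_snds i)).
  - exists (PPair c1 c2). exact (computes_pair _ _ _ _ Hc1 Hc2).
  - exists (PComp PFst c). exact (computes_comp _ _ _ _ computes_fst Hc).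
  - exists (PComp PSnd c). exact (computes_comp _ _ _ _ computes_snd Hc).
  - destruct (Ho g (or_introl eq_refl)) as [cg Hg].
    exists (PComp cg c). exact (computes_comp _ _ _ _ Hg Hc).
  - exists (PComp c2 (PPair c1 PId)).
    exact (computes_comp _ _ _ _ Hc2 (computes_pair _ _ _ _ Hc1 computes_id)).
  - (* the step reads its stack [npair x (npair m r)] off the argument
       [npair r (npair m x)] that [PRec] passes to it *)
    set (G := PComp c3 (PPair (PComp PSnd PSnd) (PPair (PComp PFst PSnd) PFst))).
    assert (CG : computes G
      (fun x => eval (npair (un2 (un2 x)) (npair (un1 (un2 x)) (un1 x))) e3)).
    { apply (computes_comp _ _ _ _ Hc3), computes_pair;
        [|apply computes_pair; [|exact computes_fst]];
        apply computes_comp; auto using computes_fst, computes_snd. }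
    exists (PComp (PRec c2 G) (PPair PId c1)).
    eapply computes_ext.
    + exact (computes_comp _ _ _ _ (computes_rec _ _ _ _ Hc2 CG)
                          (computes_pair _ _ _ _ computes_id Hc1)).
    + intros x. cbv beta. rewrite !un1_pair, !un2_pair, eval_rec.
      apply iterR_ext. intros m y. rewrite !un1_pair, !un2_pair, un1_pair. reflexivity.
Qed.

Corollary compile_recursive e :
  (forall g, In g (calls e) -> recursive g) -> recursive (fun x => eval (npair x 0) e).
Proof.
  intros H. destruct (compile e H) as [c Hc].
  exists (PComp c (PPair PId PZero)).
  exact (computes_comp _ _ _ _ Hc (computes_pair _ _ _ _ computes_id computes_zero)).
Qed.

End Programs.

Section Weakening.
Local Open Scope nat_scope.

(** [ins c v r] inserts the value [v] at depth [c] into the stack [r], and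
    [sh c e] renumbers the variables of [e] that lie at depth [c] or deeper,
    so that [sh c e] ignores the inserted value. *)
Fixpoint ins (c v r : nat) : nat :=
  match c with O => npair v r | S c' => npair (un1 r) (ins c' v (un2 r)) end.

Fixpoint sh (c : nat) (e : pexp) : pexp :=
  match e with
  | EZ => EZ
  | ES a => ES (sh c a)
  | EV i => EV (if i <? c then i else S i)
  | EP a b => EP (sh c a) (sh c b)
  | EFst a => EFst (sh c a)
  | ESnd a => ESnd (sh c a)
  | ECall g a => ECall g (sh c a)
  | ELet a b => ELet (sh c a) (sh (S c) b)
  | ERec n b s => ERec (sh c n) (sh c b) (sh (S (S c)) s)
  end.

Lemma snds_S i r : snds (S i) r = un2 (snds i r).
Proof. reflexivity. Qed.

Lemma snds_0 r : snds 0 r = r.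
Proof. reflexivity. Qed.

Lemma snds_add a b r : snds (a + b) r = snds a (snds b r).
Proof. induction a; [reflexivity|]. rewrite Nat.add_succ_l, !snds_S. congruence. Qed.

Lemma snds_ins_le i c v r : i <= c -> snds i (ins c v r) = ins (c - i) v (snds i r).
Proof.
  revert c v r. induction i as [|i IH]; intros c v r H.
  - rewrite Nat.sub_0_r. reflexivity.
  - rewrite !snds_S, IH by lia. destruct (c - i) as [|c'] eqn:Ec; [lia|].
    simpl. rewrite un2_pair. f_equal. lia.
Qed.

Lemma eval_sh e c v r : eval (ins c v r) (sh c e) = eval r e.
Proof.
  revert c v r. induction e; intros c v r; cbn [sh].
  9: { rewrite !eval_rec, IHe1, IHe2. apply iterR_ext. intros k x.
       specialize (IHe3 (S (S c)) v (npair x (npair k r))). simpl in IHe3.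
       rewrite !un1_pair, !un2_pair, !un1_pair in IHe3. exact IHe3. }
  all: simpl; try congruence.
  - destruct (Nat.ltb_spec i c).
    + rewrite snds_ins_le by lia. destruct (c - i) as [|c'] eqn:Ec; [lia|].
      apply un1_pair.
    + replace (S i) with ((i - c) + S c) by lia. rewrite snds_add.
      rewrite snds_S, snds_ins_le by lia. rewrite Nat.sub_diag. simpl. rewrite un2_pair.
      rewrite <- snds_add. do 2 f_equal. lia.
  - rewrite IHe1. specialize (IHe2 (S c) v (npair (eval r e1) r)). simpl in IHe2.
    rewrite un1_pair, un2_pair in IHe2. exact IHe2.
Qed.

Lemma eval_sh0 e v r : eval (npair v r) (sh 0 e) = eval r e.
Proof. exact (eval_sh e 0 v r). Qed.

Lemma eval_EZ r : eval r EZ = 0. Proof. reflexivity. Qed.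
Lemma eval_ES r a : eval r (ES a) = S (eval r a). Proof. reflexivity. Qed.
Lemma eval_EV r i : eval r (EV i) = un1 (snds i r). Proof. reflexivity. Qed.
Lemma eval_EP r a b : eval r (EP a b) = npair (eval r a) (eval r b). Proof. reflexivity. Qed.
Lemma eval_EFst r a : eval r (EFst a) = un1 (eval r a). Proof. reflexivity. Qed.
Lemma eval_ESnd r a : eval r (ESnd a) = un2 (eval r a). Proof. reflexivity. Qed.
Lemma eval_ECall r g a : eval r (ECall g a) = g (eval r a). Proof. reflexivity. Qed.
Lemma eval_ELet r a b : eval r (ELet a b) = eval (npair (eval r a) r) b. Proof. reflexivity. Qed.

End Weakening.

Ltac ev_simp :=
  repeat progress (rewrite ?eval_EZ, ?eval_ES, ?eval_EV, ?eval_EP, ?eval_EFst,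
    ?eval_ESnd, ?eval_ECall, ?eval_ELet, ?snds_S, ?snds_0, ?un1_pair, ?un2_pair,
    ?eval_sh0).

Tactic Notation "iter_step" uconstr(F) :=
  rewrite (iterR_ext _ _ F) by (intros; ev_simp; reflexivity).

Definition b2n (b : bool) : nat := if b then 1 else 0.

Lemma b2n_neq0 b : negb (Nat.eqb (b2n b) 0) = b.
Proof. destruct b; reflexivity. Qed.

Section Arithmetic.
Local Open Scope nat_scope.

Definition econst (n : nat) : pexp := Nat.iter n ES EZ.
Lemma eval_const r n : eval r (econst n) = n.
Proof. induction n; simpl; congruence. Qed.

Definition eadd a b := ERec b a (ES (EV 0)).
Lemma eval_add r a b : eval r (eadd a b) = eval r a + eval r b.
Proof.
  unfold eadd. rewrite eval_rec. iter_step (fun _ x => S x).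
  generalize (eval r b). induction n; simpl; lia.
Qed.

(** The predecessor carries the pair (n-1, n) along the recursion. *)
Definition epred a := EFst (ERec a (EP EZ EZ) (EP (ESnd (EV 0)) (ES (ESnd (EV 0))))).
Lemma eval_pred r a : eval r (epred a) = pred (eval r a).
Proof.
  unfold epred. rewrite eval_EFst, eval_rec.
  iter_step (fun _ x => npair (un2 x) (S (un2 x))). ev_simp.
  assert (H : forall n, iterR (npair 0 0) (fun _ x => npair (un2 x) (S (un2 x))) n
                        = npair (pred n) n).
  { induction n; simpl; [reflexivity|]. rewrite IHn, un2_pair. reflexivity. }
  rewrite H, un1_pair. reflexivity.
Qed.

Definition esub a b := ERec b a (epred (EV 0)).
Lemma eval_sub r a b : eval r (esub a b) = eval r a - eval r b.
Proof.
  unfold esub. rewrite eval_rec.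
  rewrite (iterR_ext _ _ (fun _ x => pred x)) by (intros; rewrite eval_pred; ev_simp; reflexivity).
  generalize (eval r b). induction n; simpl; lia.
Qed.

Definition emul a b := ELet a (ERec (sh 0 b) EZ (eadd (EV 0) (EV 2))).
Lemma eval_mul r a b : eval r (emul a b) = eval r a * eval r b.
Proof.
  unfold emul. rewrite eval_ELet, eval_rec, eval_sh0.
  rewrite (iterR_ext _ _ (fun _ x => x + eval r a))
    by (intros; rewrite eval_add; ev_simp; reflexivity).
  ev_simp. generalize (eval r b). induction n; simpl; lia.
Qed.

Definition eifz c t f := ERec c t (sh 0 (sh 0 f)).
Lemma eval_ifz r c t f :
  eval r (eifz c t f) = match eval r c with O => eval r t | S _ => eval r f end.
Proof.
  unfold eifz. rewrite eval_rec. destruct (eval r c); simpl; [reflexivity|].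
  rewrite !eval_sh0. reflexivity.
Qed.

Definition eleb a b := eifz (esub a b) (econst 1) EZ.
Lemma eval_leb r a b : eval r (eleb a b) = b2n (eval r a <=? eval r b).
Proof.
  unfold eleb. rewrite eval_ifz, eval_sub, eval_const.
  destruct (Nat.leb_spec (eval r a) (eval r b));
    destruct (eval r a - eval r b) eqn:E; simpl; lia.
Qed.

Definition eeqb a b := eifz (eadd (esub a b) (esub b a)) (econst 1) EZ.
Lemma eval_eqb r a b : eval r (eeqb a b) = b2n (eval r a =? eval r b).
Proof.
  unfold eeqb. rewrite eval_ifz, eval_add, !eval_sub, eval_const.
  destruct (Nat.eqb_spec (eval r a) (eval r b));
    destruct (eval r a - eval r b + (eval r b - eval r a)) eqn:E; simpl; lia.
Qed.

Definition eand a b := eifz a EZ (eifz b EZ (econst 1)).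
Lemma eval_and r a b :
  eval r (eand a b) = b2n (negb (eval r a =? 0) && negb (eval r b =? 0)).
Proof.
  unfold eand. rewrite !eval_ifz, eval_const.
  destruct (eval r a); destruct (eval r b); reflexivity.
Qed.

Definition eneg a := eifz a (econst 1) EZ.
Lemma eval_neg r a : eval r (eneg a) = b2n (eval r a =? 0).
Proof. unfold eneg. rewrite eval_ifz, eval_const. destruct (eval r a); reflexivity. Qed.

Definition epow a b := ELet a (ERec (sh 0 b) (econst 1) (emul (EV 0) (EV 2))).
Lemma eval_pow r a b : eval r (epow a b) = eval r a ^ eval r b.
Proof.
  unfold epow. rewrite eval_ELet, eval_rec, eval_sh0, eval_const.
  rewrite (iterR_ext _ _ (fun _ x => x * eval r a))
    by (intros; rewrite eval_mul; ev_simp; reflexivity).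
  generalize (eval r b). induction n; simpl; [reflexivity|]. rewrite IHn. lia.
Qed.

(** Euclidean division by a positive number, counting up to the dividend
    while carrying the pair (quotient, remainder). *)
Definition edivmod a m :=
  ELet m (ERec (sh 0 a) (EP EZ EZ)
     (eifz (eeqb (ES (ESnd (EV 0))) (EV 2))
           (EP (EFst (EV 0)) (ES (ESnd (EV 0))))
           (EP (ES (EFst (EV 0))) EZ))).
Lemma eval_divmod r a m : 0 < eval r m ->
  eval r (edivmod a m) = npair (eval r a / eval r m) (eval r a mod eval r m).
Proof.
  intros Hm. unfold edivmod. rewrite eval_ELet, eval_rec, eval_sh0.
  set (M := eval r m) in *.
  rewrite (iterR_ext _ _ (fun _ x => if S (un2 x) =? M then npair (S (un1 x)) 0
                                     else npair (un1 x) (S (un2 x))))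
    by (intros; rewrite eval_ifz, eval_eqb; ev_simp; destruct (_ =? _); reflexivity).
  ev_simp. generalize (eval r a). intros n.
  induction n as [|n IH].
  - simpl. rewrite Nat.Div0.div_0_l, Nat.Div0.mod_0_l. reflexivity.
  - cbn [iterR]. rewrite IH, un1_pair, un2_pair.
    assert (Hd := Nat.div_mod n M ltac:(lia)). assert (Hr := Nat.mod_upper_bound n M ltac:(lia)).
    destruct (Nat.eqb_spec (S (n mod M)) M) as [E|E]; f_equal.
    + apply (Nat.div_unique _ _ _ 0); lia.
    + apply (Nat.mod_unique _ _ (S (n / M))); lia.
    + apply (Nat.div_unique _ _ _ (S (n mod M))); lia.
    + apply (Nat.mod_unique _ _ (n / M)); lia.
Qed.

Definition ediv a m := EFst (edivmod a m).
Definition emod a m := ESnd (edivmod a m).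
Lemma eval_div r a m : 0 < eval r m -> eval r (ediv a m) = eval r a / eval r m.
Proof. intros H. unfold ediv. rewrite eval_EFst, eval_divmod by exact H. apply un1_pair. Qed.
Lemma eval_mod r a m : 0 < eval r m -> eval r (emod a m) = eval r a mod eval r m.
Proof. intros H. unfold emod. rewrite eval_ESnd, eval_divmod by exact H. apply un2_pair. Qed.

Definition ebex N P := ERec N EZ (eifz (EV 0) (eifz (sh 0 P) EZ (econst 1)) (econst 1)).
Lemma eval_bex r N P : eval r (ebex N P) =
  b2n (existsb (fun i => negb (eval (npair i r) P =? 0)) (seq 0 (eval r N))).
Proof.
  unfold ebex. rewrite eval_rec.
  rewrite (iterR_ext _ _ (fun i acc => match acc with
      | O => match eval (npair i r) P with O => O | S _ => 1 end
      | S _ => 1 end))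
    by (intros; rewrite !eval_ifz; ev_simp; rewrite ?eval_const; reflexivity).
  ev_simp. generalize (eval r N). intros m. induction m as [|m IH]; [reflexivity|].
  cbn [iterR]. rewrite IH, seq_S, existsb_app. simpl.
  destruct (existsb _ (seq 0 m)); simpl; [reflexivity|].
  destruct (eval (npair m r) P); reflexivity.
Qed.

End Arithmetic.

Section SituationCodes.
Local Open Scope nat_scope.

Lemma encS_app t r : encS (t ++ r) = encS t + 2 ^ length t * encS r.
Proof. induction t as [|b t IH]; simpl; [lia|]. rewrite IH. destruct b; lia. Qed.

Lemma encS_bounds t : 2 ^ length t - 1 <= encS t /\ encS t <= 2 ^ S (length t) - 2.
Proof.
  induction t as [|b t IH]; cbn [length encS]; [simpl; lia|].
  rewrite !Nat.pow_succ_r' in *. pose proof (Nat.pow_nonzero 2 (length t)). destruct b; lia.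
Qed.

Lemma encS_ge_length u : length u <= encS u.
Proof.
  pose proof (encS_bounds u).
  assert (length u < 2 ^ length u) by (apply Nat.pow_gt_lin_r; lia). lia.
Qed.

Lemma encS_lt_pow u L : length u < L -> encS u < 2 ^ L.
Proof.
  intros H. pose proof (encS_bounds u) as [_ B].
  assert (2 ^ S (length u) <= 2 ^ L) by (apply Nat.pow_le_mono_r; lia).
  pose proof (Nat.pow_nonzero 2 L). lia.
Qed.

Lemma encS_cons_neq0 b u : encS (b :: u) =? 0 = false.
Proof. apply Nat.eqb_neq. simpl. destruct b; lia. Qed.

(** The length of a situation, recovered from its code by repeatedly
    dropping the first symbol. *)
Definition lenstep (st : nat) : nat :=
  if un1 st =? 0 then st else npair ((un1 st - 1) / 2) (S (un2 st)).
Definition lenf (e : nat) : nat := un2 (iterR (npair e 0) (fun _ st => lenstep st) e).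

Lemma lenstep_iter u c k : iterR (npair (encS u) c) (fun _ st => lenstep st) k =
  npair (encS (skipn k u)) (c + Nat.min k (length u)).
Proof.
  induction k as [|k IH]; cbn [iterR].
  - simpl. f_equal. lia.
  - rewrite IH. unfold lenstep. rewrite un1_pair, un2_pair.
    assert (Hs := length_skipn k u).
    replace (skipn (S k) u) with (tl (skipn k u))
      by (clear; revert u; induction k; intros [|b u]; simpl; auto).
    destruct (skipn k u) as [|b s]; cbn [tl length] in *.
    + rewrite Nat.eqb_refl. f_equal. lia.
    + rewrite encS_cons_neq0. f_equal; [|lia]. cbn [encS].
      replace (2 * encS s + 1 + (if b then 1 else 0) - 1) with (b2n b + encS s * 2)
        by (destruct b; simpl; lia).
      rewrite Nat.div_add by lia. destruct b; reflexivity.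
Qed.

Lemma lenf_encS u : lenf (encS u) = length u.
Proof. unfold lenf. rewrite lenstep_iter, un2_pair. pose proof (encS_ge_length u). lia. Qed.

Definition prefc (e m : nat) : nat := (e - (2 ^ m - 1)) mod 2 ^ m + (2 ^ m - 1).

Lemma prefc_encS u m : m <= length u -> prefc (encS u) m = encS (firstn m u).
Proof.
  intros Hm. rewrite <- (firstn_skipn m u) at 1. rewrite encS_app.
  assert (Hl : length (firstn m u) = m) by (rewrite length_firstn; lia). rewrite Hl.
  pose proof (encS_bounds (firstn m u)) as [B1 B2]. rewrite Hl in B1, B2.
  unfold prefc. simpl in B2.
  set (P := 2 ^ m) in *. set (X := encS (skipn m u)). set (Y := encS (firstn m u)) in *.
  rewrite (Nat.mul_comm P X).
  replace (Y + X * P - (P - 1)) with ((Y - (P - 1)) + X * P) by lia.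
  assert (P <> 0) by (apply Nat.pow_nonzero; lia).
  rewrite Nat.Div0.mod_add, Nat.mod_small by lia. lia.
Qed.

Definition childf (e b : nat) : nat := e + 2 ^ lenf e * (1 + b).

Lemma childf_encS u b : childf (encS u) (b2n b) = encS (u ++ [b]).
Proof. unfold childf. rewrite lenf_encS, encS_app. destruct b; simpl; lia. Qed.

Definition elen e := ELet e (ESnd (ERec (EV 0) (EP (EV 0) EZ)
  (eifz (EFst (EV 0)) (EV 0) (EP (ediv (epred (EFst (EV 0))) (econst 2)) (ES (ESnd (EV 0))))))).
Lemma eval_len r e : eval r (elen e) = lenf (eval r e).
Proof.
  unfold elen, lenf. rewrite eval_ELet, eval_ESnd, eval_rec. ev_simp. f_equal.
  apply iterR_ext. intros k x. rewrite eval_ifz. ev_simp. unfold lenstep.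
  destruct (un1 x) eqn:E; [reflexivity|]. rewrite eval_div by (rewrite eval_const; lia).
  ev_simp. rewrite eval_pred, eval_const. ev_simp. rewrite E. simpl. rewrite Nat.sub_0_r.
  reflexivity.
Qed.

Definition eprefc e m := ELet e (ELet (sh 0 m)
  (eadd (emod (esub (EV 1) (epred (epow (econst 2) (EV 0)))) (epow (econst 2) (EV 0)))
        (epred (epow (econst 2) (EV 0))))).
Lemma eval_prefc r e m : eval r (eprefc e m) = prefc (eval r e) (eval r m).
Proof.
  unfold eprefc, prefc. rewrite !eval_ELet, !eval_sh0, eval_add, eval_mod, eval_sub,
    !eval_pred, !eval_pow.
  - ev_simp. rewrite eval_const, Nat.sub_1_r. reflexivity.
  - rewrite eval_pow, eval_const. apply Nat.neq_0_lt_0, Nat.pow_nonzero. lia.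
Qed.

Definition echild e b :=
  ELet e (ELet (sh 0 b) (eadd (EV 1) (emul (epow (econst 2) (elen (EV 1))) (ES (EV 0))))).
Lemma eval_child r e b : eval r (echild e b) = childf (eval r e) (eval r b).
Proof.
  unfold echild, childf. rewrite !eval_ELet, !eval_sh0, eval_add, eval_mul, eval_pow,
    eval_len, eval_const.
  ev_simp. reflexivity.
Qed.

End SituationCodes.

Section Tables.
Local Open Scope nat_scope.

(** [build E f] codes the table of [f 0, ..., f (E-1)], and [look E L c]
    reads entry [c] of a table [L] of length [E]. *)
Definition build (E : nat) (f : nat -> nat) : nat := iterR 0 (fun c l => npair (f c) l) E.
Definition look (E L c : nat) : nat := un1 (snds (E - 1 - c) L).

Lemma look_build E f c : c < E -> look E (build E f) c = f c.
Proof.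
  unfold look. induction E as [|E IH]; intros H; [lia|]. cbn [build iterR]. fold (build E f).
  destruct (Nat.eq_dec c E) as [->|Hne].
  - replace (S E - 1 - E) with 0 by lia. apply un1_pair.
  - replace (S E - 1 - c) with ((E - 1 - c) + 1) by lia.
    rewrite snds_add, un2_pair. apply IH. lia.
Qed.

Lemma build_ext E f1 f2 : (forall c, f1 c = f2 c) -> build E f1 = build E f2.
Proof. intros H. unfold build. apply iterR_ext. intros; rewrite H; reflexivity. Qed.

Definition ebuild E F := ERec E EZ (EP (sh 0 F) (EV 0)).
Lemma eval_build r E F : eval r (ebuild E F) = build (eval r E) (fun c => eval (npair c r) F).
Proof.
  unfold ebuild, build. rewrite eval_rec. ev_simp. apply iterR_ext. intros k x. ev_simp.
  reflexivity.
Qed.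

Definition elook E L c := ELet E (ELet (sh 0 L) (ELet (sh 0 (sh 0 c))
  (EFst (ERec (esub (epred (EV 2)) (EV 0)) (EV 1) (ESnd (EV 0)))))).
Lemma eval_look r E L c : eval r (elook E L c) = look (eval r E) (eval r L) (eval r c).
Proof.
  unfold elook, look. rewrite !eval_ELet, !eval_sh0, eval_EFst, eval_rec, eval_sub, eval_pred.
  ev_simp. rewrite Nat.sub_1_r. f_equal. generalize (pred (eval r E) - eval r c). intros m.
  induction m as [|m IH]; cbn [iterR]; [reflexivity|]. ev_simp. rewrite IH. reflexivity.
Qed.

End Tables.

Section RationalCodes.
Local Open Scope R_scope.

(** Besides the signed codes decoded by [decQ], we compute with codes of
    nonnegative rationals: [npair a b] stands for [a / (b + 1)]. *)
Definition rq (x : nat) : R := INR (un1 x) / INR (S (un2 x)).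

Lemma INR_S_pos n : 0 < INR (S n).
Proof. apply lt_0_INR; lia. Qed.

Lemma Rlt_mult_pos_r_iff a b c : 0 < c -> a < b <-> a * c < b * c.
Proof. intros Hc. split; [apply Rmult_lt_compat_r, Hc|apply Rmult_lt_reg_r, Hc]. Qed.

Lemma Rle_mult_pos_r_iff a b c : 0 < c -> a <= b <-> a * c <= b * c.
Proof. intros Hc. split; [apply Rmult_le_compat_r; lra|apply Rmult_le_reg_r, Hc]. Qed.

Lemma even_mod2 a : Nat.even a = (a mod 2 =? 0)%nat.
Proof.
  destruct (Nat.even a) eqn:E; symmetry.
  - apply Nat.eqb_eq. apply Nat.even_spec in E. destruct E as [m ->].
    rewrite Nat.mul_comm. apply Nat.Div0.mod_mul.
  - apply Nat.eqb_neq. intros H. assert (Nat.even a = true); [|congruence].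
    apply Nat.even_spec. exists (a / 2)%nat. pose proof (Nat.div_mod a 2). lia.
Qed.

Lemma decQ_split v : decQ v =
  if (un1 v mod 2 =? 0)%nat then INR (un1 v / 2) / INR (S (un2 v))
  else - (INR ((un1 v + 1) / 2) / INR (S (un2 v))).
Proof.
  unfold decQ, decZ. fold (un1 v). fold (un2 v). rewrite even_mod2.
  destruct (un1 v mod 2 =? 0)%nat; [reflexivity|]. unfold Rdiv. ring.
Qed.

Definition exceeds_pow2 (n v : nat) : bool :=
  andb (un1 v mod 2 =? 0)%nat (negb (un1 v / 2 <=? 2 ^ n * S (un2 v))%nat).

Lemma exceeds_pow2_spec n v : decQ v > 2 ^ n <-> exceeds_pow2 n v = true.
Proof.
  unfold exceeds_pow2. rewrite decQ_split.
  pose proof (INR_S_pos (un2 v)). pose proof (pow_lt 2 n ltac:(lra)).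
  assert (E2 : INR (2 ^ n) = 2 ^ n) by (rewrite pow_INR; simpl; f_equal; lra).
  destruct (un1 v mod 2 =? 0)%nat; cbn [andb].
  - rewrite Bool.negb_true_iff, Nat.leb_gt. unfold Rgt.
    rewrite (Rlt_mult_pos_r_iff _ _ _ H).
    split; intros Hlt.
    + apply INR_lt. rewrite mult_INR, E2.
      replace (INR (un1 v / 2)) with (INR (un1 v / 2) / INR (S (un2 v)) * INR (S (un2 v)))
        by (field; lra). exact Hlt.
    + apply lt_INR in Hlt. rewrite mult_INR, E2 in Hlt.
      replace (INR (un1 v / 2) / INR (S (un2 v)) * INR (S (un2 v))) with (INR (un1 v / 2))
        by (field; lra). exact Hlt.
  - split; [|discriminate]. intros Hgt. exfalso.
    assert (0 <= INR ((un1 v + 1) / 2) / INR (S (un2 v)))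
      by (apply Rdiv_le_0_compat; [apply pos_INR|lra]). lra.
Qed.

Definition qmul (x y : nat) : nat := npair (un1 x * un1 y) (S (un2 x) * S (un2 y) - 1).
Definition qadd (x y : nat) : nat :=
  npair (un1 x * S (un2 y) + un1 y * S (un2 x)) (S (un2 x) * S (un2 y) - 1).
Definition qmax (x y : nat) : nat :=
  if (un1 x * S (un2 y) <=? un1 y * S (un2 x))%nat then y else x.
(** Nonnegative codes of [max(q, 0)] and [max(1 + q, 0)] for the signed code [v] of [q]. *)
Definition qpos (v : nat) : nat :=
  npair (if (un1 v mod 2 =? 0)%nat then (un1 v / 2)%nat else 0%nat) (un2 v).
Definition qonep (v : nat) : nat :=
  npair (if (un1 v mod 2 =? 0)%nat then (S (un2 v) + un1 v / 2)%nat
         else (S (un2 v) - (un1 v + 1) / 2)%nat) (un2 v).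
(** The signed code of a nonnegative code. *)
Definition qout (x : nat) : nat := npair (2 * un1 x) (un2 x).
Definition qone : nat := npair 1 0.

Lemma S_mul_pred a b : S (S a * S b - 1) = (S a * S b)%nat.
Proof. nia. Qed.

Lemma rq_mul x y : rq (qmul x y) = rq x * rq y.
Proof.
  unfold rq, qmul. rewrite un1_pair, un2_pair, S_mul_pred, !mult_INR.
  pose proof (INR_S_pos (un2 x)). pose proof (INR_S_pos (un2 y)). field. lra.
Qed.

Lemma rq_add x y : rq (qadd x y) = rq x + rq y.
Proof.
  unfold rq, qadd. rewrite un1_pair, un2_pair, S_mul_pred, plus_INR, !mult_INR.
  pose proof (INR_S_pos (un2 x)). pose proof (INR_S_pos (un2 y)). field. lra.
Qed.

Lemma rq_le_iff x y : rq x <= rq y <-> (un1 x * S (un2 y) <= un1 y * S (un2 x))%nat.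
Proof.
  unfold rq. pose proof (INR_S_pos (un2 x)). pose proof (INR_S_pos (un2 y)).
  rewrite (Rle_mult_pos_r_iff _ _ (INR (S (un2 x)) * INR (S (un2 y)))) by nra.
  replace (INR (un1 x) / INR (S (un2 x)) * (INR (S (un2 x)) * INR (S (un2 y))))
    with (INR (un1 x * S (un2 y))) by (rewrite mult_INR; field; lra).
  replace (INR (un1 y) / INR (S (un2 y)) * (INR (S (un2 x)) * INR (S (un2 y))))
    with (INR (un1 y * S (un2 x))) by (rewrite mult_INR; field; lra).
  split; [apply INR_le|apply le_INR].
Qed.

Lemma rq_max x y : rq (qmax x y) = Rmax (rq x) (rq y).
Proof.
  unfold qmax. destruct (Nat.leb_spec (un1 x * S (un2 y)) (un1 y * S (un2 x))) as [H|H].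
  - apply rq_le_iff in H. rewrite Rmax_right; lra.
  - assert (H' : (un1 y * S (un2 x) <= un1 x * S (un2 y))%nat) by lia.
    apply rq_le_iff in H'. rewrite Rmax_left; lra.
Qed.

Lemma decQ_qout x : decQ (qout x) = rq x.
Proof.
  rewrite decQ_split. unfold qout, rq. rewrite un1_pair, un2_pair.
  replace (2 * un1 x mod 2)%nat with 0%nat
    by (symmetry; rewrite Nat.mul_comm; apply Nat.Div0.mod_mul).
  replace (2 * un1 x / 2)%nat with (un1 x) by (rewrite Nat.mul_comm, Nat.div_mul; lia).
  reflexivity.
Qed.

Lemma rq_qone : rq qone = 1.
Proof. unfold rq, qone. rewrite un1_pair, un2_pair. simpl. lra. Qed.

Lemma rq_zero : rq 0 = 0.
Proof. unfold rq. change (un1 0) with 0%nat. simpl. lra. Qed.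

Lemma rq_pos v : rq (qpos v) = Rmax (decQ v) 0.
Proof.
  rewrite decQ_split. unfold rq, qpos. rewrite un1_pair, un2_pair.
  pose proof (INR_S_pos (un2 v)).
  destruct (un1 v mod 2 =? 0)%nat.
  - rewrite Rmax_left; [reflexivity|]. apply Rdiv_le_0_compat; [apply pos_INR|lra].
  - rewrite Rmax_right.
    + simpl. unfold Rdiv. ring.
    + assert (0 <= INR ((un1 v + 1) / 2) / INR (S (un2 v)))
        by (apply Rdiv_le_0_compat; [apply pos_INR|lra]). lra.
Qed.

Lemma rq_onep v : rq (qonep v) = Rmax (1 + decQ v) 0.
Proof.
  rewrite decQ_split. unfold rq, qonep. rewrite un1_pair, un2_pair.
  pose proof (INR_S_pos (un2 v)).
  destruct (un1 v mod 2 =? 0)%nat.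
  - rewrite Rmax_left.
    + rewrite plus_INR. field. lra.
    + assert (0 <= INR (un1 v / 2) / INR (S (un2 v)))
        by (apply Rdiv_le_0_compat; [apply pos_INR|lra]). lra.
  - set (a := ((un1 v + 1) / 2)%nat). set (d := INR (S (un2 v))).
    assert (Ediv : INR a / d <= 1 <-> (a <= S (un2 v))%nat).
    { unfold d. rewrite (Rle_mult_pos_r_iff _ _ (INR (S (un2 v)))) by lra.
      replace (INR a / INR (S (un2 v)) * INR (S (un2 v))) with (INR a) by (field; lra).
      rewrite Rmult_1_l. split; [apply INR_le|apply le_INR]. }
    destruct (Nat.le_gt_cases a (S (un2 v))) as [Hl|Hl].
    + rewrite minus_INR by exact Hl. rewrite Rmax_left.
      * unfold d. field. lra.
      * apply Ediv in Hl. lra.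
    + replace (S (un2 v) - a)%nat with 0%nat by lia. rewrite Rmax_right.
      * simpl. unfold Rdiv. ring.
      * assert (~ INR a / d <= 1) by (rewrite Ediv; lia). lra.
Qed.

Definition eqmul a b := ELet a (ELet (sh 0 b)
  (EP (emul (EFst (EV 1)) (EFst (EV 0)))
      (epred (emul (ES (ESnd (EV 1))) (ES (ESnd (EV 0))))))).
Lemma eval_qmul r a b : eval r (eqmul a b) = qmul (eval r a) (eval r b).
Proof.
  unfold eqmul, qmul. rewrite !eval_ELet. ev_simp.
  rewrite eval_mul, eval_pred, eval_mul. ev_simp. rewrite Nat.sub_1_r. reflexivity.
Qed.

Definition eqadd a b := ELet a (ELet (sh 0 b)
  (EP (eadd (emul (EFst (EV 1)) (ES (ESnd (EV 0)))) (emul (EFst (EV 0)) (ES (ESnd (EV 1)))))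
      (epred (emul (ES (ESnd (EV 1))) (ES (ESnd (EV 0))))))).
Lemma eval_qadd r a b : eval r (eqadd a b) = qadd (eval r a) (eval r b).
Proof.
  unfold eqadd, qadd. rewrite !eval_ELet. ev_simp.
  rewrite eval_add, !eval_mul, eval_pred, eval_mul. ev_simp. rewrite Nat.sub_1_r. reflexivity.
Qed.

Definition eqmax a b := ELet a (ELet (sh 0 b)
  (eifz (eleb (emul (EFst (EV 1)) (ES (ESnd (EV 0)))) (emul (EFst (EV 0)) (ES (ESnd (EV 1)))))
        (EV 1) (EV 0))).
Lemma eval_qmax r a b : eval r (eqmax a b) = qmax (eval r a) (eval r b).
Proof.
  unfold eqmax, qmax. rewrite !eval_ELet. ev_simp. rewrite eval_ifz, eval_leb, !eval_mul.
  ev_simp. destruct (Nat.leb _ _); reflexivity.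
Qed.

Definition eeven v := eeqb (emod v (econst 2)) EZ.
Lemma eval_even r v : eval r (eeven v) = b2n (eval r v mod 2 =? 0)%nat.
Proof. unfold eeven. rewrite eval_eqb, eval_mod; rewrite eval_const; [reflexivity|lia]. Qed.

Definition eexceeds n v := ELet v (eand (eeven (EFst (EV 0)))
  (eneg (eleb (ediv (EFst (EV 0)) (econst 2))
              (emul (epow (econst 2) (sh 0 n)) (ES (ESnd (EV 0))))))).
Lemma eval_exceeds r n v : eval r (eexceeds n v) = b2n (exceeds_pow2 (eval r n) (eval r v)).
Proof.
  unfold eexceeds, exceeds_pow2. rewrite eval_ELet, eval_and, eval_even, eval_neg, eval_leb,
    eval_div, eval_mul, eval_pow; ev_simp; rewrite ?eval_const; try lia.
  rewrite b2n_neq0. destruct (_ <=? _)%nat; reflexivity.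
Qed.

Definition eqpos a := ELet a
  (EP (eifz (eeven (EFst (EV 0))) EZ (ediv (EFst (EV 0)) (econst 2))) (ESnd (EV 0))).
Lemma eval_qpos r a : eval r (eqpos a) = qpos (eval r a).
Proof.
  unfold eqpos, qpos. rewrite eval_ELet. ev_simp. rewrite eval_ifz, eval_even, eval_div;
    ev_simp; rewrite ?eval_const; try lia.
  destruct (Nat.eqb _ 0); reflexivity.
Qed.

Definition eqonep a := ELet a (EP (eifz (eeven (EFst (EV 0)))
   (esub (ES (ESnd (EV 0))) (ediv (ES (EFst (EV 0))) (econst 2)))
   (eadd (ES (ESnd (EV 0))) (ediv (EFst (EV 0)) (econst 2)))) (ESnd (EV 0))).
Lemma eval_qonep r a : eval r (eqonep a) = qonep (eval r a).
Proof.
  unfold eqonep, qonep. rewrite eval_ELet. ev_simp.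
  rewrite eval_ifz, eval_even, eval_sub, eval_add, !eval_div; ev_simp; rewrite ?eval_const;
    try lia.
  rewrite Nat.add_1_r. destruct (Nat.eqb _ 0); reflexivity.
Qed.

Definition eqout a := ELet a (EP (eadd (EFst (EV 0)) (EFst (EV 0))) (ESnd (EV 0))).
Lemma eval_qout r a : eval r (eqout a) = qout (eval r a).
Proof. unfold eqout, qout. rewrite eval_ELet. ev_simp. rewrite eval_add. ev_simp. f_equal. lia. Qed.

Definition eqone := EP (econst 1) EZ.
Lemma eval_qone r : eval r eqone = qone.
Proof. unfold eqone. ev_simp. rewrite eval_const. reflexivity. Qed.

End RationalCodes.

Section RealSequences.
Local Open Scope R_scope.

Lemma Rmax_le_compat a b c d : a <= c -> b <= d -> Rmax a b <= Rmax c d.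
Proof.
  intros. apply Rle_trans with (Rmax c b); [apply Rle_max_compat_r|apply Rle_max_compat_l]; auto.
Qed.

Lemma weighted_le_1 h c d a b : 0 <= c <= h -> 0 <= d <= 1 - h ->
  0 <= a <= 1 -> 0 <= b <= 1 -> c * a + d * b <= 1.
Proof.
  intros Hc Hd Ha Hb.
  assert (c * a <= c) by (rewrite <- (Rmult_1_r c) at 2; apply Rmult_le_compat_l; lra).
  assert (d * b <= d) by (rewrite <- (Rmult_1_r d) at 2; apply Rmult_le_compat_l; lra).
  lra.
Qed.

Lemma incr_le (f : nat -> R) :
  (forall n, f n <= f (S n)) -> forall a b, (a <= b)%nat -> f a <= f b.
Proof. intros H a b Hab. induction Hab; [lra|]. specialize (H m). lra. Qed.

Lemma lim_gt_witness (u : nat -> R) l c :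
  is_lim_seq u (Finite l) -> c < l -> exists n, c < u n.
Proof.
  intros H Hc. apply NNPP. intros Hn.
  assert (Hle : forall n, u n <= c)
    by (intros n; apply Rnot_lt_le; intros Hl; apply Hn; exists n; exact Hl).
  assert (Hr := is_lim_seq_le u (fun _ => c) l c Hle H (is_lim_seq_const c)). simpl in Hr. lra.
Qed.

Lemma eventually_ge_half (f : nat -> R) l :
  is_lim_seq f (Finite l) -> (forall n, f n <= f (S n)) -> 0 < l ->
  exists J, forall j, (J <= j)%nat -> l / 2 <= f j.
Proof.
  intros Hl Hm Hp. destruct (lim_gt_witness f l (l / 2) Hl ltac:(lra)) as [J HJ].
  exists J. intros j Hj. pose proof (incr_le f Hm J j Hj). lra.
Qed.

Definition increases_to (c : nat -> R) (l : R) : Prop :=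
  (forall j, 0 <= c j <= l) /\ (forall j, c j <= c (S j)) /\ is_lim_seq c (Finite l).

Lemma increases_to_ext (c c' : nat -> R) l :
  (forall j, c j = c' j) -> increases_to c l -> increases_to c' l.
Proof.
  intros E (H1 & H2 & H3). split; [|split].
  - intros j. rewrite <- E. apply H1.
  - intros j. rewrite <- !E. apply H2.
  - exact (is_lim_seq_ext _ _ _ E H3).
Qed.

Lemma clip_increases_to (a : nat -> R) l :
  (forall j, a j <= a (S j)) -> is_lim_seq a (Finite l) -> 0 <= l ->
  increases_to (fun j => Rmax (a j) 0) l.
Proof.
  intros Hm Hl Hpos.
  assert (Hle : forall j, a j <= l) by (intros j; exact (is_lim_seq_incr_compare _ _ Hl Hm j)).
  split; [|split].
  - intros j. specialize (Hle j). unfold Rmax. destruct (Rle_dec (a j) 0); lra.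
  - intros j. specialize (Hm j). unfold Rmax.
    destruct (Rle_dec (a j) 0), (Rle_dec (a (S j)) 0); lra.
  - assert (Emax : forall x, Rmax x 0 = (x + Rabs x) / 2)
      by (intros x; unfold Rmax, Rabs; destruct (Rle_dec x 0), (Rcase_abs x); lra).
    rewrite <- (Rmax_left l 0), Emax by exact Hpos.
    apply is_lim_seq_ext with (fun n => (a n + Rabs (a n)) / 2); [intros n; symmetry; apply Emax|].
    unfold Rdiv. apply is_lim_seq_mult'; [|apply is_lim_seq_const].
    apply is_lim_seq_plus'; [exact Hl|]. exact (is_lim_seq_abs _ (Finite l) Hl).
Qed.

Lemma bounded_by_weight (c s : nat -> R) l B :
  0 < l -> is_lim_seq c (Finite l) -> (forall j, c j <= c (S j)) ->
  (forall j, 0 <= s j) -> (forall j, s j <= s (S j)) ->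
  (forall j, c (S j) * s j <= B) -> forall j, s j <= 2 * B / l.
Proof.
  intros Hl Hc Hcm Hs0 Hsm HB.
  destruct (eventually_ge_half c l Hc Hcm Hl) as [J HJ].
  assert (Hlate : forall j, (J <= j)%nat -> s j <= 2 * B / l).
  { intros j Hj. specialize (HJ (S j) ltac:(lia)). specialize (HB j). specialize (Hs0 j).
    apply Rmult_le_reg_l with (l / 2); [lra|].
    replace (l / 2 * (2 * B / l)) with B by (field; lra). nra. }
  intros j. destruct (Nat.le_gt_cases J j); [apply Hlate; lia|].
  apply Rle_trans with (s J); [apply (incr_le s Hsm); lia|apply Hlate; lia].
Qed.

Lemma limit_step_ineq (a b x y z : nat -> R) al be X Y Z :
  is_lim_seq a (Finite al) -> is_lim_seq b (Finite be) -> is_lim_seq x (Finite X) ->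
  is_lim_seq y (Finite Y) -> is_lim_seq z (Finite Z) ->
  (forall j, a (S j) * x j + b (S j) * y j <= z (S j)) -> al * X + be * Y <= Z.
Proof.
  intros Ha Hb Hx Hy Hz H.
  apply (is_lim_seq_le _ _ (al * X + be * Y) Z H).
  - apply is_lim_seq_plus'; apply is_lim_seq_mult'; auto;
      [apply (is_lim_seq_incr_1 a)|apply (is_lim_seq_incr_1 b)]; assumption.
  - apply (is_lim_seq_incr_1 z). exact Hz.
Qed.

Fixpoint rsum (f : nat -> R) (n : nat) : R :=
  match n with O => 0 | S n' => rsum f n' + f n' end.

Lemma rsum_le f g k : (forall n, (n < k)%nat -> f n <= g n) -> rsum f k <= rsum g k.
Proof.
  induction k as [|k IH]; intros H; simpl; [lra|].
  apply Rplus_le_compat; [apply IH; intros; apply H; lia|apply H; lia].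
Qed.

Lemma rsum_nonneg f k : (forall n, 0 <= f n) -> 0 <= rsum f k.
Proof. intros H; induction k; simpl; [lra|]. specialize (H k). lra. Qed.

Lemma rsum_lin a b f g k :
  a * rsum f k + b * rsum g k = rsum (fun n => a * f n + b * g n) k.
Proof. induction k; simpl; [lra|]. rewrite <- IHk. ring. Qed.

Lemma rsum_geom k : rsum (fun n => / 2 ^ S n) k = 1 - / 2 ^ k.
Proof.
  induction k; cbn [rsum]; [simpl; lra|]. rewrite IHk. simpl. field. apply pow_nonzero. lra.
Qed.

Lemma rsum_ge_count f k N : (N <= k)%nat -> (forall n, 0 <= f n) ->
  (forall n, (n < N)%nat -> 1 <= f n) -> INR N <= rsum f k.
Proof.
  intros Hk H0 H1.
  assert (G : forall k, INR (Nat.min N k) <= rsum f k).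
  { induction k0 as [|k0 IH]; cbn [rsum].
    - rewrite Nat.min_0_r. simpl. lra.
    - destruct (Nat.lt_ge_cases k0 N).
      + replace (Nat.min N (S k0)) with (S (Nat.min N k0)) by lia. rewrite S_INR.
        specialize (H1 k0 H). lra.
      + replace (Nat.min N (S k0)) with (Nat.min N k0) by lia. specialize (H0 k0). lra. }
  specialize (G k). replace (Nat.min N k) with N in G by lia. exact G.
Qed.

End RealSequences.

Lemma prefix_length w n : length (prefix w n) = n.
Proof. induction n; simpl; [reflexivity|]. rewrite length_app, IHn. simpl. lia. Qed.

Lemma firstn_prefix w k m : (k <= m)%nat -> firstn k (prefix w m) = prefix w k.
Proof.
  induction m; intros H.
  - assert (k = 0%nat) by lia. subst. reflexivity.
  - destruct (Nat.eq_dec k (S m)) as [->|Hne].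
    + rewrite <- (prefix_length w (S m)) at 1. apply firstn_all.
    + simpl. rewrite firstn_app, prefix_length.
      replace (k - m)%nat with 0%nat by lia. simpl. rewrite app_nil_r. apply IHm. lia.
Qed.

Lemma firstn_snoc_le (s : list bool) x k : (k <= length s)%nat -> firstn k (s ++ [x]) = firstn k s.
Proof.
  intros H. rewrite firstn_app. replace (k - length s)%nat with 0%nat by lia.
  apply app_nil_r.
Qed.

Lemma firstn_S_nth (u : list bool) k : (k < length u)%nat ->
  firstn (S k) u = firstn k u ++ [nth k u false].
Proof.
  revert k; induction u as [|a u IH]; intros k Hk; simpl in Hk; [lia|].
  destruct k as [|k]; [reflexivity|].
  change (a :: firstn (S k) u = (a :: firstn k u) ++ [nth k u false]).
  rewrite IH by lia. reflexivity.
Qed.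

Section Supermartingales.
Local Open Scope R_scope.
Variable phi : forecasting_system.

Lemma upper_exp_le lo hi f v :
  Rbar_le (upper_exp lo hi f) (Finite v) <->
  (forall p, lo <= p <= hi -> p * f true + (1 - p) * f false <= v).
Proof.
  unfold upper_exp. destruct (Lub_Rbar_correct
    (fun v => exists p, lo <= p <= hi /\ v = p * f true + (1 - p) * f false)) as [Hub Hl].
  split.
  - intros H p Hp.
    exact (Rbar_le_trans _ _ _ (Hub _ (ex_intro _ p (conj Hp eq_refl))) H).
  - intros H. apply Hl. intros x [p [Hp ->]]. simpl. apply H; exact Hp.
Qed.

(** Expectations are affine in the probability, so the supermartingale
    inequality only needs to be checked at the two endpoints of the forecast. *)
Lemma supermartingale_iff M : supermartingale phi M <->
  forall s,
    fs_lo phi s * M (s ++ [true]) + (1 - fs_lo phi s) * M (s ++ [false]) <= M s /\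
    fs_hi phi s * M (s ++ [true]) + (1 - fs_hi phi s) * M (s ++ [false]) <= M s.
Proof.
  unfold supermartingale. setoid_rewrite upper_exp_le.
  pose proof (fs_lo_le_hi phi) as Hlh. split.
  - intros H s. specialize (Hlh s). split; apply H; lra.
  - intros H s p Hp. destruct (H s) as [H1 H2].
    set (a := M (s ++ [true])) in *. set (b := M (s ++ [false])) in *.
    destruct (Rle_dec b a).
    + assert (0 <= (fs_hi phi s - p) * (a - b)) by (apply Rmult_le_pos; lra). lra.
    + assert (0 <= (p - fs_lo phi s) * (b - a)) by (apply Rmult_le_pos; lra). lra.
Qed.

Lemma supermartingale_child_le M s : supermartingale phi M ->
  M (s ++ [true]) <= M s \/ M (s ++ [false]) <= M s.
Proof.
  intros H. destruct (proj1 (supermartingale_iff M) H s) as [H1 _].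
  pose proof (fs_lo_ge0 phi s). pose proof (fs_lo_le_hi phi s). pose proof (fs_hi_le1 phi s).
  set (a := M (s ++ [true])) in *. set (b := M (s ++ [false])) in *.
  destruct (Rle_dec a (M s)) as [|Ha]; [left; auto|right].
  destruct (Rle_dec b (M s)) as [|Hb]; [assumption|exfalso].
  apply Rnot_le_lt in Ha, Hb.
  assert (0 <= fs_lo phi s * (a - M s)) by (apply Rmult_le_pos; lra).
  assert (0 < (1 - fs_lo phi s) * (b - M s) \/ fs_lo phi s = 1) as [|Hlo1].
  { destruct (Req_dec (fs_lo phi s) 1); [right; assumption|left].
    apply Rmult_lt_0_compat; lra. }
  - lra.
  - rewrite Hlo1 in H1. lra.
Qed.

Lemma supermartingale_descending_path M u : supermartingale phi M ->
  exists w', prefix w' (length u) = u /\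
    forall m, (length u <= m)%nat -> M (prefix w' m) <= M u.
Proof.
  intros HM.
  (* follow [u], then always move to a child that does not increase [M] *)
  set (step := fun v => if Rle_dec (M (v ++ [true])) (M v) then true else false).
  set (Q := fix Q (m : nat) : situation := match m with O => u | S m' => Q m' ++ [step (Q m')] end).
  set (w' := fun k => if Nat.ltb k (length u) then nth k u false else step (Q (k - length u)%nat)).
  assert (Hinit : forall k, (k <= length u)%nat -> prefix w' k = firstn k u).
  { induction k; intros Hk; cbn [prefix]; [reflexivity|].
    rewrite IHk, firstn_S_nth by lia. f_equal. unfold w'.
    destruct (Nat.ltb_spec k (length u)); [reflexivity|lia]. }
  assert (Hext : forall m, prefix w' (length u + m) = Q m).
  { induction m.
    - rewrite Nat.add_0_r, Hinit by lia. apply firstn_all.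
    - rewrite Nat.add_succ_r. simpl. rewrite IHm. do 2 f_equal. unfold w'.
      destruct (Nat.ltb_spec (length u + m) (length u)); [lia|]. do 2 f_equal. lia. }
  assert (Hdesc : forall m, M (Q m) <= M u).
  { induction m; simpl; [lra|].
    unfold step. destruct (Rle_dec (M (Q m ++ [true])) (M (Q m))); [lra|].
    destruct (supermartingale_child_le M (Q m) HM); lra. }
  exists w'. split.
  - rewrite Hinit by lia. apply firstn_all.
  - intros m Hm. replace m with (length u + (m - length u))%nat by lia. rewrite Hext. apply Hdesc.
Qed.

Lemma indicator_1 (G : path -> Prop) w : G w -> indicator G w = 1.
Proof. intros H. unfold indicator. destruct (excluded_middle_informative (G w)); tauto. Qed.

Lemma indicator_ge0 (G : path -> Prop) w : 0 <= indicator G w.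
Proof. unfold indicator. destruct (excluded_middle_informative (G w)); lra. Qed.

Lemma liminf_le_const (u : nat -> R) c N :
  (forall n, (N <= n)%nat -> u n <= c) -> Rbar_le (LimInf_seq u) c.
Proof. intros H. rewrite <- (LimInf_seq_const c). apply LimInf_le. exists N. exact H. Qed.

Lemma liminf_ge_const (u : nat -> R) c N :
  (forall n, (N <= n)%nat -> c <= u n) -> Rbar_le c (LimInf_seq u).
Proof. intros H. rewrite <- (LimInf_seq_const c) at 1. apply LimInf_le. exists N. exact H. Qed.

Definition certificate (G : path -> Prop) (M : situation -> R) : Prop :=
  forall w, Rbar_le (Finite (indicator G w)) (LimInf_seq (fun n => M (prefix w n))).

Lemma certificate_bounds M (G : path -> Prop) u :
  supermartingale phi M -> certificate G M ->
  0 <= M u /\ ((forall w', prefix w' (length u) = u -> G w') -> 1 <= M u).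
Proof.
  intros HM HG. destruct (supermartingale_descending_path M u HM) as [w' [Hp Hle]].
  assert (Hc := Rbar_le_trans _ _ _ (HG w')
                  (liminf_le_const (fun n => M (prefix w' n)) (M u) (length u) Hle)).
  simpl in Hc. split.
  - pose proof (indicator_ge0 G w'); lra.
  - intros HGu. rewrite indicator_1 in Hc by (apply HGu; exact Hp). exact Hc.
Qed.

Lemma upper_prob_le_certificate (G : path -> Prop) M :
  supermartingale phi M -> certificate G M -> Rbar_le (upper_prob phi G) (M []).
Proof.
  intros HM HG. unfold upper_prob.
  match goal with |- Rbar_le (Glb_Rbar ?E) _ => destruct (Glb_Rbar_correct E) as [Hlb _] end.
  apply Hlb. exists M. auto.
Qed.

Lemma le_upper_prob (G : path -> Prop) x :
  (forall M, supermartingale phi M -> certificate G M -> x <= M []) ->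
  Rbar_le (Finite x) (upper_prob phi G).
Proof.
  intros H. unfold upper_prob.
  match goal with |- Rbar_le _ (Glb_Rbar ?E) => destruct (Glb_Rbar_correct E) as [_ Hg] end.
  apply Hg. intros v [M [HM [HG ->]]]. exact (H M HM HG).
Qed.

End Supermartingales.

Definition approximates (g : nat -> nat) (r : situation -> R) : Prop :=
  forall s, (forall n, decQ (g (npair (encS s) n)) <= decQ (g (npair (encS s) (S n)))) /\
            is_lim_seq (fun n => decQ (g (npair (encS s) n))) (Finite (r s)).

Lemma approximates_le g r s n : approximates g r -> decQ (g (npair (encS s) n)) <= r s.
Proof. intros H. exact (is_lim_seq_incr_compare _ _ (proj2 (H s)) (proj1 (H s)) n). Qed.

Lemma qpos_increases_to g r u : approximates g r -> 0 <= r u ->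
  increases_to (fun j => rq (qpos (g (npair (encS u) j)))) (r u).
Proof.
  intros H Hr. destruct (H u) as [Hm Hl].
  apply (increases_to_ext (fun j => Rmax (decQ (g (npair (encS u) j))) 0));
    [intros j; symmetry; apply rq_pos|].
  exact (clip_increases_to _ _ Hm Hl Hr).
Qed.

Lemma qonep_increases_to g r u : approximates g (fun s => - r s) -> r u <= 1 ->
  increases_to (fun j => rq (qonep (g (npair (encS u) j)))) (1 - r u).
Proof.
  intros H Hr. destruct (H u) as [Hm Hl].
  apply (increases_to_ext (fun j => Rmax (1 + decQ (g (npair (encS u) j))) 0));
    [intros j; symmetry; apply rq_onep|].
  apply clip_increases_to; [intros j; specialize (Hm j); lra| |lra].
  exact (is_lim_seq_plus' (fun _ => 1) _ 1 (- r u) (is_lim_seq_const 1) Hl).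
Qed.

(** * Martin-Löf test randomness implies Martin-Löf randomness *)

Section TestFromSupermartingale.
Local Open Scope R_scope.
Variable phi : forecasting_system.
Variable T : situation -> R.
Variable g : nat -> nat.
Hypothesis Hg : recursive g.
Hypothesis Happrox : approximates g T.
Hypothesis HT : test_supermartingale phi T.

Definition exceeds (n : nat) (s : situation) : Prop :=
  exists m, decQ (g (npair (encS s) m)) > 2 ^ n.

Lemma exceeds_T n s : exceeds n s -> T s > 2 ^ n.
Proof. intros [m Hm]. pose proof (approximates_le g T s m Happrox). lra. Qed.

(** The enumerator: [<<n, s>, m>] is accepted when the [m]-th approximation
    of [T s] exceeds [2^n]. *)
Definition exceeds_enum : pexp :=
  eneg (eexceeds (EFst (EFst (EV 0))) (ECall g (EP (ESnd (EFst (EV 0))) (ESnd (EV 0))))).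

Lemma eval_exceeds_enum n e m :
  eval (npair (npair (npair n e) m) 0) exceeds_enum = b2n (negb (exceeds_pow2 n (g (npair e m)))).
Proof.
  unfold exceeds_enum. rewrite eval_neg, eval_exceeds. ev_simp.
  destruct (exceeds_pow2 _ _); reflexivity.
Qed.

Lemma exceeds_rec_enumerable : rec_enumerable exceeds.
Proof.
  exists (fun x => eval (npair x 0) exceeds_enum). split.
  - apply compile_recursive. intros g' [<-|[]]. exact Hg.
  - intros n s. unfold exceeds. setoid_rewrite eval_exceeds_enum.
    setoid_rewrite exceeds_pow2_spec.
    split; intros [m Hm]; exists m; destruct (exceeds_pow2 _ _); easy.
Qed.

Definition stopped n (u : situation) : Prop :=
  exists k, (k <= length u)%nat /\ exceeds n (firstn k u).

Definition stopped_sm n (u : situation) : R :=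
  if excluded_middle_informative (stopped n u) then 1 else T u / 2 ^ n.

Lemma stopped_sm_running n u : ~ stopped n u -> stopped_sm n u = T u / 2 ^ n.
Proof. intros H. unfold stopped_sm. destruct (excluded_middle_informative _); tauto. Qed.

Lemma stopped_sm_stopped n u : stopped n u -> stopped_sm n u = 1.
Proof. intros H. unfold stopped_sm. destruct (excluded_middle_informative _); tauto. Qed.

Lemma stopped_child n s x : stopped n s -> stopped n (s ++ [x]).
Proof.
  intros [k [Hk HA]]. exists k. split; [rewrite length_app; simpl; lia|].
  rewrite firstn_snoc_le by lia. exact HA.
Qed.

(** Stopping only happens where [T / 2^n] exceeds 1, so it never increases
    the value at a child of a running situation. *)
Lemma stopped_sm_child n s x :
  ~ stopped n s -> stopped_sm n (s ++ [x]) <= T (s ++ [x]) / 2 ^ n.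
Proof.
  intros Hs. unfold stopped_sm. destruct (excluded_middle_informative _) as [[k [Hk HA]]|]; [|lra].
  rewrite length_app in Hk. simpl in Hk.
  destruct (Nat.eq_dec k (S (length s))) as [->|Hne].
  - replace (S (length s)) with (length (s ++ [x])) in HA by (rewrite length_app; simpl; lia).
    rewrite firstn_all in HA. apply exceeds_T in HA.
    pose proof (pow_lt 2 n ltac:(lra)). apply Rmult_le_reg_r with (2 ^ n); [lra|].
    unfold Rdiv. rewrite Rmult_assoc, Rinv_l by lra. lra.
  - exfalso. apply Hs. exists k. split; [lia|]. rewrite firstn_snoc_le in HA by lia. exact HA.
Qed.

Lemma stopped_sm_nonneg n u : 0 <= stopped_sm n u.
Proof.
  unfold stopped_sm. destruct (excluded_middle_informative _); [lra|].
  destruct HT as [_ [H0 _]]. pose proof (pow_lt 2 n ltac:(lra)).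
  apply Rdiv_le_0_compat; [apply H0|lra].
Qed.

Lemma stopped_sm_supermartingale n : supermartingale phi (stopped_sm n).
Proof.
  apply supermartingale_iff. intros s.
  assert (Gen : forall p, 0 <= p <= 1 ->
     p * T (s ++ [true]) + (1 - p) * T (s ++ [false]) <= T s ->
     p * stopped_sm n (s ++ [true]) + (1 - p) * stopped_sm n (s ++ [false]) <= stopped_sm n s).
  { intros p Hp HTp. destruct (classic (stopped n s)) as [Hs|Hs].
    - rewrite !stopped_sm_stopped by auto using stopped_child. lra.
    - rewrite (stopped_sm_running n s Hs).
      pose proof (stopped_sm_child n s true Hs). pose proof (stopped_sm_child n s false Hs).
      pose proof (pow_lt 2 n ltac:(lra)).
      apply Rle_trans with
        ((p * T (s ++ [true]) + (1 - p) * T (s ++ [false])) / 2 ^ n).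
      + replace ((p * T (s ++ [true]) + (1 - p) * T (s ++ [false])) / 2 ^ n) with
          (p * (T (s ++ [true]) / 2 ^ n) + (1 - p) * (T (s ++ [false]) / 2 ^ n))
          by (field; lra).
        apply Rplus_le_compat; apply Rmult_le_compat_l; lra.
      + apply Rmult_le_compat_r; [left; apply Rinv_0_lt_compat; lra|exact HTp]. }
  destruct HT as [HTs _]. destruct (proj1 (supermartingale_iff phi T) HTs s) as [H1 H2].
  pose proof (fs_lo_ge0 phi s). pose proof (fs_lo_le_hi phi s). pose proof (fs_hi_le1 phi s).
  split; apply Gen; auto; lra.
Qed.

Lemma stopped_sm_certificate n : certificate (cylinder_set (exceeds n)) (stopped_sm n).
Proof.
  intros w0. destruct (classic (cylinder_set (exceeds n) w0)) as [Hc|Hc].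
  - rewrite indicator_1 by exact Hc. destruct Hc as [t [HA Hcyl]].
    apply (liminf_ge_const _ 1 (length t)). intros m Hm.
    rewrite stopped_sm_stopped; [lra|]. exists (length t). rewrite prefix_length.
    split; [exact Hm|]. rewrite firstn_prefix by exact Hm. rewrite Hcyl. exact HA.
  - unfold indicator. destruct (excluded_middle_informative _); [tauto|].
    apply (liminf_ge_const _ 0 0). intros; apply stopped_sm_nonneg.
Qed.

(** No prefix of the root is stopped, since [T [] = 1 <= 2^n]. *)
Lemma stopped_sm_root n : stopped_sm n [] = / 2 ^ n.
Proof.
  destruct HT as [_ [_ H1]]. rewrite stopped_sm_running.
  - rewrite H1. unfold Rdiv. lra.
  - intros [k [Hk HA]]. simpl in Hk. assert (k = 0%nat) by lia. subst. simpl in HA.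
    apply exceeds_T in HA. rewrite H1 in HA.
    assert (1 <= 2 ^ n) by (apply pow_R1_Rle; lra). lra.
Qed.

Lemma exceeds_ML_test : ML_test phi exceeds.
Proof.
  split; [exact exceeds_rec_enumerable|]. intros n. rewrite <- stopped_sm_root.
  apply upper_prob_le_certificate; [apply stopped_sm_supermartingale|apply stopped_sm_certificate].
Qed.

End TestFromSupermartingale.

(** If [T] is unbounded on [w], then [w] lies in every level of the test
    built from [T]. *)
Theorem ML_test_random_ML_random phi w : ML_test_random phi w -> ML_random phi w.
Proof.
  intros HR T [g [Hg Happrox]] HT. apply NNPP. intros Hunb.
  apply (HR (exceeds g) (exceeds_ML_test phi T g Hg Happrox HT)). intros n.
  assert (Hx : exists m, T (prefix w m) > 2 ^ n).
  { apply NNPP. intros Hn. apply Hunb. exists (2 ^ n). intros m. apply Rnot_lt_le. intros Hl.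
    apply Hn. exists m. exact Hl. }
  destruct Hx as [m Hm].
  destruct (lim_gt_witness _ _ _ (proj2 (Happrox (prefix w m))) Hm) as [k Hk].
  exists (prefix w m). split.
  - exists k. exact Hk.
  - unfold cylinder. rewrite prefix_length. reflexivity.
Qed.

(** Given an enumerator [hA] of a set [A] of pairs (level, situation) and
    approximators [g1], [g2], [g3], [g4] of [lo], [-lo], [hi], [-hi], the
    stage-[j], depth-[d] reaching value of level [n] at a situation [u] is 1
    if a prefix of [u] is enumerated into [A (n+1)] within stage [j], and
    otherwise the best of the two expectations of the values at the children
    at depth [d-1], with the forecast bounds replaced by their stage-[j]
    lower approximations (0 at depth 0). Its rational code is computed by
    dynamic programming over the table of all situations of bounded length. *)
Section ReachingCode.
Local Open Scope R_scope.
Variables hA g1 g2 g3 g4 : nat -> nat.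

Definition inA_stage (n j c : nat) : bool :=
  andb (S c <=? j)%nat (existsb (fun i => (hA (npair (npair (S n) c) i) =? 0)%nat) (seq 0 j)).

Definition hitA_stage (n j e : nat) : bool :=
  existsb (fun m => inA_stage n j (prefc e m)) (seq 0 (S (lenf e))).

(** The four stage-[j] coefficients at [u]: [cH], [dH] approximate [hi u]
    and [1 - hi u] from below, and [cL], [dL] approximate [lo u] and [1 - lo u]. *)
Definition cH (j : nat) (u : situation) : R := rq (qpos (g3 (npair (encS u) j))).
Definition dH (j : nat) (u : situation) : R := rq (qonep (g4 (npair (encS u) j))).
Definition cL (j : nat) (u : situation) : R := rq (qpos (g1 (npair (encS u) j))).
Definition dL (j : nat) (u : situation) : R := rq (qonep (g2 (npair (encS u) j))).

Fixpoint reach (n j d : nat) (u : situation) : R :=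
  if hitA_stage n j (encS u) then 1 else
  match d with
  | O => 0
  | S d' => Rmax (cH j u * reach n j d' (u ++ [true]) + dH j u * reach n j d' (u ++ [false]))
                 (cL j u * reach n j d' (u ++ [true]) + dL j u * reach n j d' (u ++ [false]))
  end.

Lemma reach_0 n j u : reach n j 0 u = if hitA_stage n j (encS u) then 1 else 0.
Proof. reflexivity. Qed.

Lemma reach_S n j d u : reach n j (S d) u =
  if hitA_stage n j (encS u) then 1 else
  Rmax (cH j u * reach n j d (u ++ [true]) + dH j u * reach n j d (u ++ [false]))
       (cL j u * reach n j d (u ++ [true]) + dL j u * reach n j d (u ++ [false])).
Proof. reflexivity. Qed.

Definition comb (j e f1 f0 : nat) : nat :=
  qmax (qadd (qmul (qpos (g3 (npair e j))) f1) (qmul (qonep (g4 (npair e j))) f0))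
       (qadd (qmul (qpos (g1 (npair e j))) f1) (qmul (qonep (g2 (npair e j))) f0)).

Definition leaf_entry (n j c : nat) : nat := if hitA_stage n j c then qone else 0%nat.
Definition step_entry (n j E L c : nat) : nat :=
  if hitA_stage n j c then qone else comb j c (look E L (childf c 1)) (look E L (childf c 0)).
Definition reach_table (n j E d : nat) : nat :=
  iterR (build E (leaf_entry n j)) (fun _ L => build E (step_entry n j E L)) d.
Definition reach_code (n j e : nat) : nat :=
  look (2 ^ S (e + j)) (reach_table n j (2 ^ S (e + j)) j) e.

Lemma reach_table_correct n j L d u : (length u + d < L)%nat ->
  rq (look (2 ^ L) (reach_table n j (2 ^ L) d) (encS u)) = reach n j d u.
Proof.
  revert u. induction d as [|d IH]; intros u Hu; unfold reach_table; cbn [iterR].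
  - rewrite look_build by (apply encS_lt_pow; lia).
    unfold leaf_entry. simpl. destruct (hitA_stage n j (encS u)); [apply rq_qone|apply rq_zero].
  - fold (reach_table n j (2 ^ L) d). rewrite look_build by (apply encS_lt_pow; lia).
    unfold step_entry. cbn [reach]. destruct (hitA_stage n j (encS u)); [apply rq_qone|].
    unfold comb. rewrite rq_max, !rq_add, !rq_mul.
    change 1%nat with (b2n true). change 0%nat with (b2n false).
    rewrite !childf_encS, !IH by (rewrite length_app; simpl; lia).
    reflexivity.
Qed.

Lemma reach_code_correct n j u : rq (reach_code n j (encS u)) = reach n j j u.
Proof. apply reach_table_correct. pose proof (encS_ge_length u). lia. Qed.

Definition reach_sum (j : nat) (u : situation) : R := rsum (fun n => reach n j j u) j.

Definition T_approx (u : situation) (j : nat) : R :=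
  match u with [] => 1 | _ => reach_sum j u end.

Definition T_code (x : nat) : nat :=
  qout (if (un1 x =? 0)%nat then qone
        else iterR 0%nat (fun n acc => qadd acc (reach_code n (un2 x) (un1 x))) (un2 x)).

Lemma T_code_correct u j : decQ (T_code (npair (encS u) j)) = T_approx u j.
Proof.
  unfold T_code. rewrite decQ_qout, un1_pair, un2_pair. destruct u as [|b u'].
  - apply rq_qone.
  - rewrite encS_cons_neq0. unfold T_approx, reach_sum.
    assert (Hk : forall k,
      rq (iterR 0 (fun n acc => qadd acc (reach_code n j (encS (b :: u')))) k) =
      rsum (fun n => reach n j j (b :: u')) k).
    { induction k as [|k IH]; cbn [iterR rsum].
      - apply rq_zero.
      - rewrite rq_add, IH, reach_code_correct. reflexivity. }
    apply Hk.
Qed.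

End ReachingCode.

Lemma existsb_ext {A} (f g : A -> bool) l :
  (forall x, f x = g x) -> existsb f l = existsb g l.
Proof. intros H; induction l; simpl; [reflexivity|]. rewrite H, IHl. reflexivity. Qed.

Section ReachingProgram.
Local Open Scope nat_scope.
Variables hA g1 g2 g3 g4 : nat -> nat.

Definition einA n j c := ELet n (ELet (sh 0 j) (ELet (sh 0 (sh 0 c))
  (eand (eleb (ES (EV 0)) (EV 1))
        (ebex (EV 1) (eeqb (ECall hA (EP (EP (ES (EV 3)) (EV 1)) (EV 0))) EZ))))).
Lemma eval_inA r n j c : eval r (einA n j c) = b2n (inA_stage hA (eval r n) (eval r j) (eval r c)).
Proof.
  unfold einA, inA_stage. rewrite !eval_ELet, !eval_sh0, eval_and, eval_leb, eval_bex. ev_simp.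
  rewrite !b2n_neq0. do 2 f_equal. apply existsb_ext. intros i.
  rewrite eval_eqb. ev_simp. apply b2n_neq0.
Qed.

Definition ehitA n j e := ELet n (ELet (sh 0 j) (ELet (sh 0 (sh 0 e))
  (ebex (ES (elen (EV 0))) (einA (EV 3) (EV 2) (eprefc (EV 1) (EV 0)))))).
Lemma eval_hitA r n j e :
  eval r (ehitA n j e) = b2n (hitA_stage hA (eval r n) (eval r j) (eval r e)).
Proof.
  unfold ehitA, hitA_stage. rewrite !eval_ELet, !eval_sh0, eval_bex. ev_simp. rewrite eval_len.
  ev_simp. f_equal. apply existsb_ext. intros m. rewrite eval_inA, eval_prefc. ev_simp.
  apply b2n_neq0.
Qed.

Definition ecomb j e f1 f0 :=
  eqmax (eqadd (eqmul (eqpos (ECall g3 (EP e j))) f1) (eqmul (eqonep (ECall g4 (EP e j))) f0))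
        (eqadd (eqmul (eqpos (ECall g1 (EP e j))) f1) (eqmul (eqonep (ECall g2 (EP e j))) f0)).
Lemma eval_comb r j e f1 f0 : eval r (ecomb j e f1 f0) =
  comb g1 g2 g3 g4 (eval r j) (eval r e) (eval r f1) (eval r f0).
Proof.
  unfold ecomb, comb. rewrite eval_qmax, !eval_qadd, !eval_qmul, !eval_qpos, !eval_qonep.
  ev_simp. reflexivity.
Qed.

Definition elevels D E L0 F := ERec D L0 (ebuild (sh 0 (sh 0 E)) F).
Lemma eval_levels r D E L0 F : eval r (elevels D E L0 F) =
  iterR (eval r L0)
    (fun d L => build (eval r E) (fun c => eval (npair c (npair L (npair d r))) F)) (eval r D).
Proof.
  unfold elevels. rewrite eval_rec. apply iterR_ext. intros d L. rewrite eval_build, !eval_sh0.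
  reflexivity.
Qed.

(** The table entries, in the environment [c :: (L :: d ::) E :: e :: j :: n :: _]. *)
Definition leaf_entry_exp := eifz (ehitA (EV 4) (EV 3) (EV 0)) EZ eqone.
Definition step_entry_exp := eifz (ehitA (EV 6) (EV 5) (EV 0))
  (ecomb (EV 5) (EV 0) (elook (EV 3) (EV 1) (echild (EV 0) (econst 1)))
                       (elook (EV 3) (EV 1) (echild (EV 0) EZ)))
  eqone.

Definition ereach n j e := ELet n (ELet (sh 0 j) (ELet (sh 0 (sh 0 e))
  (ELet (epow (econst 2) (ES (eadd (EV 0) (EV 1))))
    (ELet (elevels (EV 2) (EV 0) (ebuild (EV 0) leaf_entry_exp) step_entry_exp)
          (elook (EV 1) (EV 0) (EV 2)))))).

Lemma eval_reach r n j e :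
  eval r (ereach n j e) = reach_code hA g1 g2 g3 g4 (eval r n) (eval r j) (eval r e).
Proof.
  unfold ereach, reach_code. rewrite !eval_ELet, !eval_sh0, eval_look. ev_simp.
  rewrite eval_levels, eval_build, eval_pow, eval_const. ev_simp. rewrite eval_add. ev_simp.
  set (E := 2 ^ S (eval r e + eval r j)).
  unfold reach_table. f_equal.
  set (env := npair E (npair (eval r e) (npair (eval r j) (npair (eval r n) r)))).
  assert (HL : build E (fun c => eval (npair c env) leaf_entry_exp)
               = build E (leaf_entry hA (eval r n) (eval r j))).
  { apply build_ext. intros c. unfold leaf_entry_exp, leaf_entry.
    rewrite eval_ifz, eval_hitA. unfold env. ev_simp.
    destruct (hitA_stage _ _ _ _); cbn [b2n]; [apply eval_qone|reflexivity]. }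
  rewrite HL. apply iterR_ext. intros d L. apply build_ext. intros c.
  unfold step_entry_exp, step_entry. rewrite eval_ifz, eval_hitA. unfold env. ev_simp.
  destruct (hitA_stage _ _ _ _); cbn [b2n]; [apply eval_qone|].
  rewrite eval_comb, !eval_look, !eval_child, eval_const. ev_simp. reflexivity.
Qed.

Definition eT_code := ELet (EFst (EV 0)) (ELet (ESnd (EV 1))
  (eqout (eifz (EV 1) eqone (ERec (EV 0) EZ (eqadd (EV 0) (ereach (EV 1) (EV 2) (EV 3))))))).

Lemma eval_T_code x : eval (npair x 0) eT_code = T_code hA g1 g2 g3 g4 x.
Proof.
  unfold eT_code, T_code. rewrite !eval_ELet, eval_qout, eval_ifz. ev_simp.
  destruct (un1 x); cbn [Nat.eqb]; [rewrite eval_qone; reflexivity|].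
  rewrite eval_rec. ev_simp. f_equal. apply iterR_ext. intros k acc.
  rewrite eval_qadd, eval_reach. ev_simp. reflexivity.
Qed.

Lemma T_code_recursive : recursive hA -> recursive g1 -> recursive g2 -> recursive g3 ->
  recursive g4 -> recursive (T_code hA g1 g2 g3 g4).
Proof.
  intros H0 H1 H2 H3 H4. destruct (compile_recursive eT_code) as [c Hc].
  - intros g Hg. vm_compute in Hg.
    repeat (destruct Hg as [<-|Hg]; [assumption|]). destruct Hg.
  - exists c. intros x. destruct (Hc x) as [k Hk]. exists k. rewrite Hk, eval_T_code.
    reflexivity.
Qed.

End ReachingProgram.

(** * Martin-Löf randomness implies Martin-Löf test randomness *)

Section SupermartingaleFromTest.
Local Open Scope R_scope.
Variable phi : forecasting_system.
Hypothesis Hnd : non_degenerate phi.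
Variables hA g1 g2 g3 g4 : nat -> nat.
Variable A : nat -> situation -> Prop.
Hypothesis HA : forall n s, A n s <-> exists k, hA (npair (npair n (encS s)) k) = 0%nat.
Hypothesis Hbound : forall n, Rbar_le (upper_prob phi (cylinder_set (A n))) (Finite (/ 2 ^ n)).
Hypothesis Hlo : approximates g1 (fs_lo phi).
Hypothesis Hnlo : approximates g2 (fun s => - fs_lo phi s).
Hypothesis Hhi : approximates g3 (fs_hi phi).
Hypothesis Hnhi : approximates g4 (fun s => - fs_hi phi s).

Notation lo := (fs_lo phi).
Notation hi := (fs_hi phi).
Notation reach := (reach hA g1 g2 g3 g4).
Notation reach_sum := (reach_sum hA g1 g2 g3 g4).
Notation T_approx := (T_approx hA g1 g2 g3 g4).
Notation cH := (cH g3). Notation dH := (dH g4). Notation cL := (cL g1). Notation dL := (dL g2).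

Lemma cH_increases u : increases_to (fun j => cH j u) (hi u).
Proof.
  apply qpos_increases_to; [exact Hhi|].
  pose proof (fs_lo_ge0 phi u). pose proof (fs_lo_le_hi phi u). lra.
Qed.

Lemma dH_increases u : increases_to (fun j => dH j u) (1 - hi u).
Proof. apply qonep_increases_to; [exact Hnhi|apply fs_hi_le1]. Qed.

Lemma cL_increases u : increases_to (fun j => cL j u) (lo u).
Proof. apply qpos_increases_to; [exact Hlo|apply fs_lo_ge0]. Qed.

Lemma dL_increases u : increases_to (fun j => dL j u) (1 - lo u).
Proof.
  apply qonep_increases_to; [exact Hnlo|].
  pose proof (fs_lo_le_hi phi u). pose proof (fs_hi_le1 phi u). lra.
Qed.

Lemma coef_bounds j u :
  (0 <= cH j u <= hi u /\ 0 <= dH j u <= 1 - hi u) /\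
  (0 <= cL j u <= lo u /\ 0 <= dL j u <= 1 - lo u).
Proof.
  split; split;
    [apply (cH_increases u)|apply (dH_increases u)|apply (cL_increases u)|apply (dL_increases u)].
Qed.

Lemma coef_mono j u :
  (cH j u <= cH (S j) u /\ dH j u <= dH (S j) u) /\
  (cL j u <= cL (S j) u /\ dL j u <= dL (S j) u).
Proof.
  split; split;
    [apply (cH_increases u)|apply (dH_increases u)|apply (cL_increases u)|apply (dL_increases u)].
Qed.

Lemma inA_stage_spec n j c : inA_stage hA n j c = true <->
  (c < j)%nat /\ exists k, (k < j)%nat /\ hA (npair (npair (S n) c) k) = 0%nat.
Proof.
  unfold inA_stage. rewrite Bool.andb_true_iff, Nat.leb_le, existsb_exists.
  setoid_rewrite in_seq. setoid_rewrite Nat.eqb_eq.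
  split; intros [H1 [k [Hk Hz]]]; split; try lia; exists k; split; auto; lia.
Qed.

Lemma hitA_stage_spec n j u : hitA_stage hA n j (encS u) = true <->
  exists m, (m <= length u)%nat /\ inA_stage hA n j (encS (firstn m u)) = true.
Proof.
  unfold hitA_stage. rewrite lenf_encS, existsb_exists. setoid_rewrite in_seq.
  split; intros [m [Hm H]]; exists m; (split; [lia|]);
    [rewrite <- prefc_encS by lia|rewrite prefc_encS by lia]; exact H.
Qed.

Lemma hitA_stage_mono n j u :
  hitA_stage hA n j (encS u) = true -> hitA_stage hA n (S j) (encS u) = true.
Proof.
  rewrite !hitA_stage_spec. intros [m [Hm H]]. exists m. split; [exact Hm|].
  apply inA_stage_spec in H. apply inA_stage_spec.
  destruct H as [Hc [k [Hk Hz]]]. split; [lia|]. exists k. split; [lia|exact Hz].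
Qed.

Lemma hitA_stage_cylinder n j u : hitA_stage hA n j (encS u) = true ->
  forall w', prefix w' (length u) = u -> cylinder_set (A (S n)) w'.
Proof.
  intros E w' Hw'. apply hitA_stage_spec in E. destruct E as [m [Hm HAb]].
  apply inA_stage_spec in HAb. destruct HAb as [_ [k [_ Hk]]].
  exists (firstn m u). split.
  - apply HA. exists k. exact Hk.
  - unfold cylinder. rewrite length_firstn, Nat.min_l by exact Hm.
    rewrite <- Hw', firstn_prefix by lia. reflexivity.
Qed.

Lemma reach_bounds n j d u : 0 <= reach n j d u <= 1.
Proof.
  revert u; induction d as [|d IH]; intros u;
    [rewrite reach_0|rewrite reach_S]; destruct (hitA_stage hA n j (encS u)); try lra.
  destruct (IH (u ++ [true])), (IH (u ++ [false])).
  destruct (coef_bounds j u) as [[? ?] [? ?]]. pose proof (fs_lo_le_hi phi u).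
  unfold Rmax. destruct (Rle_dec _ _); split; nra.
Qed.

Lemma reach_mono_depth n j d u : reach n j d u <= reach n j (S d) u.
Proof.
  revert u; induction d as [|d IH]; intros u.
  - rewrite reach_0, reach_S. destruct (hitA_stage hA n j (encS u)); [lra|].
    destruct (reach_bounds n j 0 (u ++ [true])), (reach_bounds n j 0 (u ++ [false])).
    destruct (coef_bounds j u) as [[? ?] _].
    eapply Rle_trans; [|apply Rmax_l].
    apply Rplus_le_le_0_compat; apply Rmult_le_pos; lra.
  - rewrite (reach_S _ _ _ _ _ n j d), (reach_S _ _ _ _ _ n j (S d)). destruct (hitA_stage hA n j (encS u)); [lra|].
    destruct (coef_bounds j u) as [[? ?] [? ?]].
    pose proof (IH (u ++ [true])). pose proof (IH (u ++ [false])).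
    apply Rmax_le_compat; apply Rplus_le_compat; apply Rmult_le_compat_l; lra.
Qed.

Lemma reach_mono_stage n j d u : reach n j d u <= reach n (S j) d u.
Proof.
  revert u; induction d as [|d IH]; intros u;
    [rewrite !reach_0|rewrite !reach_S];
    destruct (hitA_stage hA n j (encS u)) eqn:E;
    try (rewrite (hitA_stage_mono _ _ _ E); lra);
    destruct (hitA_stage hA n (S j) (encS u)); try lra.
  - pose proof (reach_bounds n j (S d) u) as Hb. rewrite reach_S, E in Hb. lra.
  - destruct (reach_bounds n j d (u ++ [true])), (reach_bounds n j d (u ++ [false])).
    pose proof (IH (u ++ [true])). pose proof (IH (u ++ [false])).
    destruct (coef_bounds j u) as [[? ?] [? ?]]. destruct (coef_mono j u) as [[? ?] [? ?]].
    apply Rmax_le_compat; apply Rplus_le_compat; apply Rmult_le_compat; lra.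
Qed.

Lemma reach_mono_diag n j u : reach n j j u <= reach n (S j) (S j) u.
Proof. eapply Rle_trans; [apply reach_mono_depth|apply reach_mono_stage]. Qed.

(** Backward induction: every supermartingale certificate for [[A (n+1)]]
    dominates the reaching values. *)
Lemma reach_le_certificate n j M : supermartingale phi M ->
  certificate (cylinder_set (A (S n))) M -> forall d u, reach n j d u <= M u.
Proof.
  intros HM HG d. induction d as [|d IH]; intros u; [rewrite reach_0|rewrite reach_S];
    destruct (hitA_stage hA n j (encS u)) eqn:E;
    try exact (proj2 (certificate_bounds phi M _ u HM HG) (hitA_stage_cylinder n j u E));
    try exact (proj1 (certificate_bounds phi M _ u HM HG)).
  destruct (proj1 (supermartingale_iff phi M) HM u) as [HL HH].
  pose proof (IH (u ++ [true])). pose proof (IH (u ++ [false])).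
  destruct (reach_bounds n j d (u ++ [true])), (reach_bounds n j d (u ++ [false])).
  destruct (coef_bounds j u) as [[? ?] [? ?]].
  apply Rmax_lub.
  - eapply Rle_trans; [|exact HH]. apply Rplus_le_compat; apply Rmult_le_compat; lra.
  - eapply Rle_trans; [|exact HL]. apply Rplus_le_compat; apply Rmult_le_compat; lra.
Qed.

Lemma reach_root n j d : reach n j d [] <= / 2 ^ S n.
Proof.
  assert (H := Rbar_le_trans _ _ _
    (le_upper_prob phi _ (reach n j d []) (fun M HM HG => reach_le_certificate n j M HM HG d []))
    (Hbound (S n))).
  exact H.
Qed.

Lemma reach_step n j u :
  cH (S j) u * reach n j j (u ++ [true]) + dH (S j) u * reach n j j (u ++ [false])
    <= reach n (S j) (S j) u /\
  cL (S j) u * reach n j j (u ++ [true]) + dL (S j) u * reach n j j (u ++ [false])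
    <= reach n (S j) (S j) u.
Proof.
  destruct (reach_bounds n j j (u ++ [true])), (reach_bounds n j j (u ++ [false])).
  destruct (coef_bounds (S j) u) as [[? ?] [? ?]]. pose proof (fs_lo_le_hi phi u).
  rewrite reach_S. destruct (hitA_stage hA n (S j) (encS u)).
  { split; [apply weighted_le_1 with (hi u)|apply weighted_le_1 with (lo u)]; lra. }
  pose proof (reach_mono_stage n j j (u ++ [true])).
  pose proof (reach_mono_stage n j j (u ++ [false])).
  split; [eapply Rle_trans; [|apply Rmax_l]|eapply Rle_trans; [|apply Rmax_r]];
    apply Rplus_le_compat; apply Rmult_le_compat_l; lra.
Qed.

Lemma reach_on_cylinder n t w0 : A (S n) t -> cylinder t w0 ->
  exists J, forall j m d, (J <= j)%nat -> (length t <= m)%nat -> reach n j d (prefix w0 m) = 1.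
Proof.
  intros HAt Hc. apply HA in HAt. destruct HAt as [k Hk].
  exists (S (Nat.max (encS t) k)). intros j m d Hj Hm.
  assert (Hin : hitA_stage hA n j (encS (prefix w0 m)) = true).
  { apply hitA_stage_spec. exists (length t). rewrite prefix_length. split; [exact Hm|].
    rewrite firstn_prefix, Hc by exact Hm.
    apply inA_stage_spec. split; [lia|]. exists k. split; [lia|exact Hk]. }
  destruct d; [rewrite reach_0|rewrite reach_S]; rewrite Hin; reflexivity.
Qed.

Lemma reach_sum_nonneg j u : 0 <= reach_sum j u.
Proof. apply rsum_nonneg. intros n. apply reach_bounds. Qed.

Lemma reach_sum_mono j u : reach_sum j u <= reach_sum (S j) u.
Proof.
  unfold reach_sum. cbn [rsum]. pose proof (reach_bounds j (S j) (S j) u).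
  assert (rsum (fun n => reach n j j u) j <= rsum (fun n => reach n (S j) (S j) u) j)
    by (apply rsum_le; intros; apply reach_mono_diag).
  lra.
Qed.

Lemma reach_sum_root j : reach_sum j [] <= 1.
Proof.
  unfold reach_sum. apply Rle_trans with (rsum (fun n => / 2 ^ S n) j).
  - apply rsum_le. intros; apply reach_root.
  - rewrite rsum_geom. pose proof (pow_lt 2 j ltac:(lra)).
    assert (0 < / 2 ^ j) by (apply Rinv_0_lt_compat; lra). lra.
Qed.

Lemma reach_sum_step j u :
  cH (S j) u * reach_sum j (u ++ [true]) + dH (S j) u * reach_sum j (u ++ [false])
    <= reach_sum (S j) u /\
  cL (S j) u * reach_sum j (u ++ [true]) + dL (S j) u * reach_sum j (u ++ [false])
    <= reach_sum (S j) u.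
Proof.
  unfold reach_sum. rewrite !rsum_lin. cbn [rsum].
  pose proof (reach_bounds j (S j) (S j) u).
  assert (Hh : rsum (fun n => cH (S j) u * reach n j j (u ++ [true])
                              + dH (S j) u * reach n j j (u ++ [false])) j
               <= rsum (fun n => reach n (S j) (S j) u) j)
    by (apply rsum_le; intros n _; exact (proj1 (reach_step n j u))).
  assert (Hl : rsum (fun n => cL (S j) u * reach n j j (u ++ [true])
                              + dL (S j) u * reach n j j (u ++ [false])) j
               <= rsum (fun n => reach n (S j) (S j) u) j)
    by (apply rsum_le; intros n _; exact (proj2 (reach_step n j u))).
  split; lra.
Qed.

(** Non-degeneracy makes the sums bounded at every situation: both children
    carry a positive weight in the supermartingale inequality at [u]. *)
Lemma reach_sum_bounded u : exists B, forall j, reach_sum j u <= B.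
Proof.
  induction u as [|x u [B HB]] using rev_ind; [exists 1; apply reach_sum_root|].
  destruct (Hnd u) as [Hlo1 Hhi0].
  destruct x.
  - exists (2 * B / hi u).
    apply (bounded_by_weight (fun j => cH j u)); try apply (cH_increases u); try exact Hhi0;
      intros j; [apply reach_sum_nonneg|apply reach_sum_mono|].
    destruct (reach_sum_step j u) as [Hs _]. destruct (coef_bounds (S j) u) as [[_ ?] _].
    pose proof (reach_sum_nonneg j (u ++ [false])). specialize (HB (S j)). nra.
  - exists (2 * B / (1 - lo u)).
    apply (bounded_by_weight (fun j => dL j u)); try apply (dL_increases u); try lra;
      intros j; [apply reach_sum_nonneg|apply reach_sum_mono|].
    destruct (reach_sum_step j u) as [_ Hs]. destruct (coef_bounds (S j) u) as [_ [? _]].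
    pose proof (reach_sum_nonneg j (u ++ [true])). specialize (HB (S j)). nra.
Qed.

Lemma T_approx_nonempty u j : u <> [] -> T_approx u j = reach_sum j u.
Proof. intros H. destruct u; [congruence|reflexivity]. Qed.

Lemma T_approx_mono u j : T_approx u j <= T_approx u (S j).
Proof.
  destruct u as [|b u']; [simpl; lra|].
  rewrite !T_approx_nonempty by discriminate. apply reach_sum_mono.
Qed.

Lemma T_approx_bounded u : exists B, forall j, T_approx u j <= B.
Proof.
  destruct u as [|b u']; [exists 1; intros; simpl; lra|].
  destruct (reach_sum_bounded (b :: u')) as [B HB]. exists B. intros j.
  rewrite T_approx_nonempty by discriminate. apply HB.
Qed.

Lemma T_approx_step u j :
  cH (S j) u * T_approx (u ++ [true]) j + dH (S j) u * T_approx (u ++ [false]) j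
    <= T_approx u (S j) /\
  cL (S j) u * T_approx (u ++ [true]) j + dL (S j) u * T_approx (u ++ [false]) j
    <= T_approx u (S j).
Proof.
  rewrite !(T_approx_nonempty (u ++ _)) by (destruct u; discriminate).
  destruct (reach_sum_step j u) as [H1 H2]. destruct u as [|b u'].
  - pose proof (reach_sum_root (S j)). simpl T_approx. split; lra.
  - rewrite T_approx_nonempty by discriminate. split; assumption.
Qed.

Definition T_limit (u : situation) : R := real (Lim_seq (fun j => T_approx u j)).

Lemma T_limit_lim u : is_lim_seq (fun j => T_approx u j) (Finite (T_limit u)).
Proof.
  destruct (T_approx_bounded u) as [B HB].
  destruct (ex_finite_lim_seq_incr _ B (T_approx_mono u) HB) as [l Hl].
  unfold T_limit. replace (Lim_seq (fun j => T_approx u j)) with (Finite l)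
    by (symmetry; apply is_lim_seq_unique; exact Hl).
  exact Hl.
Qed.

Lemma T_approx_le_limit u j : T_approx u j <= T_limit u.
Proof. exact (is_lim_seq_incr_compare _ _ (T_limit_lim u) (T_approx_mono u) j). Qed.

Lemma T_limit_supermartingale : supermartingale phi T_limit.
Proof.
  apply supermartingale_iff. intros u.
  pose proof (T_limit_lim u) as Hu.
  pose proof (T_limit_lim (u ++ [true])) as H1.
  pose proof (T_limit_lim (u ++ [false])) as H0.
  split.
  - apply (limit_step_ineq _ _ _ _ _ _ _ _ _ _ (proj2 (proj2 (cL_increases u)))
             (proj2 (proj2 (dL_increases u))) H1 H0 Hu).
    intros j. exact (proj2 (T_approx_step u j)).
  - apply (limit_step_ineq _ _ _ _ _ _ _ _ _ _ (proj2 (proj2 (cH_increases u)))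
             (proj2 (proj2 (dH_increases u))) H1 H0 Hu).
    intros j. exact (proj1 (T_approx_step u j)).
Qed.

Lemma T_limit_test : test_supermartingale phi T_limit.
Proof.
  split; [exact T_limit_supermartingale|split].
  - intros u. eapply Rle_trans; [|apply (T_approx_le_limit u 0)].
    destruct u; [simpl; lra|apply reach_sum_nonneg].
  - assert (H := is_lim_seq_unique _ _ (T_limit_lim [])).
    rewrite (Lim_seq_ext _ (fun _ => 1)), Lim_seq_const in H by reflexivity.
    injection H. auto.
Qed.

Lemma T_limit_lower_semicomputable : recursive hA -> recursive g1 -> recursive g2 ->
  recursive g3 -> recursive g4 -> lower_semicomputable T_limit.
Proof.
  intros R0 R1 R2 R3 R4. exists (T_code hA g1 g2 g3 g4).
  split; [apply T_code_recursive; assumption|].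
  intros s. split.
  - intros n. rewrite !T_code_correct. apply T_approx_mono.
  - apply (is_lim_seq_ext (fun j => T_approx s j)); [intros j; symmetry; apply T_code_correct|].
    apply T_limit_lim.
Qed.

(** On a path lying in every level of [A], the reaching values of the first
    [N] levels are eventually all 1, so [T_limit] exceeds [N]. *)
Lemma T_limit_unbounded w0 : (forall n, cylinder_set (A n) w0) ->
  forall B, exists m, B < T_limit (prefix w0 m).
Proof.
  intros Hw B.
  assert (Hall : forall N, exists J M, forall n j m d, (n < N)%nat -> (J <= j)%nat ->
                   (M <= m)%nat -> reach n j d (prefix w0 m) = 1).
  { induction N as [|N [J [M HJM]]]; [exists 0%nat, 0%nat; intros; lia|].
    destruct (Hw (S N)) as [t [Ht Hc]]. destruct (reach_on_cylinder N t w0 Ht Hc) as [J' HJ'].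
    exists (Nat.max J J'), (Nat.max M (length t)). intros n j m d Hn Hj Hm.
    destruct (Nat.eq_dec n N) as [->|Hne]; [apply HJ'|apply HJM]; lia. }
  destruct (INR_unbounded B) as [N HN]. destruct (Hall N) as [J [M HJM]].
  exists (S M).
  assert (Hs : INR N <= reach_sum (Nat.max J N) (prefix w0 (S M))).
  { apply rsum_ge_count; [lia|intros; apply reach_bounds|].
    intros n Hn. rewrite HJM by lia. lra. }
  pose proof (T_approx_le_limit (prefix w0 (S M)) (Nat.max J N)) as HT.
  rewrite T_approx_nonempty in HT by (cbn [prefix]; apply not_eq_sym, app_cons_not_nil).
  lra.
Qed.

End SupermartingaleFromTest.

Theorem ML_random_ML_test_random phi w :
  non_degenerate phi -> computable_fs phi -> ML_random phi w -> ML_test_random phi w.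
Proof.
  intros Hnd [[[g1 [R1 H1]] [g2 [R2 H2]]] [[g3 [R3 H3]] [g4 [R4 H4]]]] HR A
    [[hA [RhA HA]] Hb] Hw.
  pose proof (T_limit_test phi Hnd hA g1 g2 g3 g4 A HA Hb H1 H2 H3 H4) as HT.
  pose proof (T_limit_lower_semicomputable phi Hnd hA g1 g2 g3 g4 A HA Hb H1 H2 H3 H4
                RhA R1 R2 R3 R4) as HL.
  destruct (HR _ HL HT) as [B HB].
  destruct (T_limit_unbounded phi Hnd hA g1 g2 g3 g4 A HA Hb H1 H2 H3 H4 w Hw B) as [m Hm].
  specialize (HB m). lra.
Qed.

Theorem theorem6p9 (phi : forecasting_system) (w : path) :
  non_degenerate phi -> computable_fs phi ->
  (ML_random phi w <-> ML_test_random phi w).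
Proof.
  intros Hnd Hc. split.
  - exact (ML_random_ML_test_random phi w Hnd Hc).
  - exact (ML_test_random_ML_random phi w).
Qed.
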